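(* Let $\sigma>0$ and let $f$ be $(\sigma',2)$-Gevrey regular on $[0,1]$ for some $\sigma'>\sigma$. Then the multiplication map $X^\sigma\to Y^\sigma$, $u\mapsto fu$, is compact.
   Context: Let $I=(0,1)$. A function $u\in C^\infty(\overline I)$ is $(\sigma,k)$-Gevrey regular ($\sigma,k>0$) if there is $C>0$ with $\sup_{x\in I}|u^{(n)}(x)|\le C\sigma^{-n}(n!)^k$ for all $n\ge0$. For $\sigma>0$, $u\in C^\infty(\overline I)$, integers $0\le N\le M$, $k\in\{0,1,2\}$, $l\in\{0,1\}$, set $|u|^{N,M}_{\sigma,k,l}=\big(\sum_{n=N}^M\frac{\sigma^{2n}}{n!^2(n+1)!^2}n^{k+l}\int_0^1(x/\sigma)^k|\partial_x^nu|^2dx\big)^{1/2}$ (with $0^0:=1$), $|u|^N_{\sigma,k,l}$ the same with $M=\infty$; $\|u\|_{\sigma,0,0}=|u|^0_{\sigma,0,0}$. Boundary seminorms: $[u]^{N,M}_\sigma=(\sum_{n=N}^M\frac{\sigma^{2n+1}}{n!^2(n+1)!^2}|u^{(n)}(0)|^2)^{1/2}$, $[u]^N_\sigma$ the same with $M=\infty$. $X^\sigma=\{u\in C^\infty(\overline I):u(1)=0,\ \|\partial_xu\|_{\sigma,0,0}+|\partial_xu|^0_{\sigma,1,0}+|\partial_xu|^0_{\sigma,2,0}+[\partial_xu]^0_\sigma<\infty\}$ and $Y^\sigma=\{u\in C^\infty(\overline I):\|u\|_{\sigma,0,0}+|u|^0_{\sigma,1,0}+[u]^0_\sigma<\infty\}$,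 Hilbert spaces with norms $\|u\|_{X^\sigma}=(\|\partial_xu\|_{\sigma,0,0}^2+(|\partial_xu|^0_{\sigma,1,0})^2+(|\partial_xu|^0_{\sigma,2,0})^2+([\partial_xu]^0_\sigma)^2)^{1/2}$, $\|u\|_{Y^\sigma}=(\|u\|_{\sigma,0,0}^2+(|u|^0_{\sigma,1,0})^2+([u]^0_\sigma)^2)^{1/2}$. *)

From Stdlib Require Import Reals Factorial Lra Lia ClassicalEpsilon.
Open Scope R_scope.

(* D is a family of derivatives of u on the closed interval [0,1]:
   D 0 = u on [0,1], D (S n) is the derivative of D n on (0,1), and each
   D n is continuous on [0,1] (within [0,1]).  u in C^oo([0,1]) with
   u^(n) = D n on [0,1]. *)
Definition in01 (x : R) : Prop := 0 <= x <= 1.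

Definition Cinf01 (u : R -> R) (D : nat -> R -> R) : Prop :=
  (forall x, in01 x -> D 0%nat x = u x) /\
  (forall n x, 0 < x < 1 -> derivable_pt_lim (D n) x (D (S n) x)) /\
  (forall n x, in01 x -> limit1_in (D n) in01 (D n x) x).

Definition gevrey (u : R -> R) (sigma : R) (k : nat) : Prop :=
  exists D : nat -> R -> R, Cinf01 u D /\
  exists C : R, C > 0 /\
    forall n x, 0 < x < 1 -> Rabs (D n x) <= C / sigma ^ n * (INR (fact n)) ^ k.

(* Riemann integral over [0,1] (unspecified if not integrable; only used
   for functions continuous on [0,1], which are integrable) *)
Definition Int01 (g : R -> R) : R :=
  epsilon (inhabits 0)
    (fun I => exists pr : Riemann_integrable g 0 1, RiemannInt pr = I).

Definition coef (sigma : R) (n : nat) : R :=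
  sigma ^ (2 * n) / ((INR (fact n)) ^ 2 * (INR (fact (S n))) ^ 2).

Definition sn_term (sigma : R) (k l : nat) (D : nat -> R -> R) (n : nat) : R :=
  coef sigma n * (INR n) ^ (k + l) *
  Int01 (fun x => (x / sigma) ^ k * (D n x) ^ 2).

Definition bd_term (sigma : R) (D : nat -> R -> R) (n : nat) : R :=
  sigma ^ (2 * n + 1) / ((INR (fact n)) ^ 2 * (INR (fact (S n))) ^ 2) * (D n 0) ^ 2.

Definition dshift (D : nat -> R -> R) : nat -> R -> R := fun n => D (S n).

Definition X_partial (sigma : R) (D : nat -> R -> R) (N : nat) : R :=
  sum_f_R0 (fun n => sn_term sigma 0 0 (dshift D) n + sn_term sigma 1 0 (dshift D) n
                     + sn_term sigma 2 0 (dshift D) n + bd_term sigma (dshift D) n) N.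

Definition Y_partial (sigma : R) (D : nat -> R -> R) (N : nat) : R :=
  sum_f_R0 (fun n => sn_term sigma 0 0 D n + sn_term sigma 1 0 D n + bd_term sigma D n) N.

(* ||u||_{X^sigma}^2 <= M, resp. ||u||_{Y^sigma}^2 <= M (series of nonnegative terms) *)
Definition XnormSq_le (sigma : R) (D : nat -> R -> R) (M : R) : Prop :=
  forall N, X_partial sigma D N <= M.
Definition YnormSq_le (sigma : R) (D : nat -> R -> R) (M : R) : Prop :=
  forall N, Y_partial sigma D N <= M.

Definition inX (sigma : R) (u : R -> R) (D : nat -> R -> R) : Prop :=
  Cinf01 u D /\ u 1 = 0 /\ exists M, XnormSq_le sigma D M.
Definition inY (sigma : R) (u : R -> R) (D : nat -> R -> R) : Prop :=
  Cinf01 u D /\ exists M, YnormSq_le sigma D M.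

(* Since u(1) = 0, a bound in X^sigma bounds every derivative u^(m) uniformly on [0,1],
   with a Lipschitz constant, uniformly along the sequence; Arzela-Ascoli and a diagonal
   extraction give a subsequence along which all derivatives converge uniformly, to the
   derivatives of a limit v. By the Leibniz rule and Cauchy-Schwarz with the geometric
   weights (sigma/sigma')^k, the n-th term of the Y^sigma norm of f w is at most C/(n+1)
   times a convolution of those weights with the X^sigma terms of w. For w = u_j - v, the
   terms of order at most N tend to 0 with j by uniform convergence, and the remaining ones
   are O(1/N) uniformly in j because the X^sigma norms are bounded. *)

From Stdlib Require Import Reals Lra Lia ClassicalEpsilon Cantor Factorial.
From Coquelicot Require Import Coquelicot.
Open Scope R_scope.

(** * Continuous functions on [0,1] *)

Definition cont01 (g : R -> R) : Prop := forall x, in01 x -> limit1_in g in01 (g x) x.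

Definition clamp (x : R) : R := Rmax 0 (Rmin 1 x).

Lemma clamp_in01 x : in01 (clamp x).
Proof. unfold clamp, in01, Rmax, Rmin; repeat destruct Rle_dec; lra. Qed.

Lemma clamp_id x : in01 x -> clamp x = x.
Proof. unfold clamp, in01, Rmax, Rmin; repeat destruct Rle_dec; lra. Qed.

Lemma clamp_lipschitz x y : Rabs (clamp x - clamp y) <= Rabs (x - y).
Proof.
  unfold clamp, Rmax, Rmin; repeat destruct Rle_dec; unfold Rabs;
    repeat destruct Rcase_abs; lra.
Qed.

Lemma in01_interval x a b : in01 a -> in01 b -> Rmin a b <= x <= Rmax a b -> in01 x.
Proof. unfold in01, Rmin, Rmax; destruct Rle_dec; lra. Qed.

Lemma continuity_pt_clamp g : cont01 g -> forall x, continuity_pt (fun t => g (clamp t)) x.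
Proof.
  intros Hg x eps Heps.
  destruct (Hg (clamp x) (clamp_in01 x) eps Heps) as [d [Hd H]].
  exists d; split; auto. intros t [_ Ht]. simpl in *. unfold R_dist in *.
  apply H. split. apply clamp_in01. eapply Rle_lt_trans. apply clamp_lipschitz. auto.
Qed.

Lemma continuous_clamp g : cont01 g -> forall x, continuous (fun t => g (clamp t)) x.
Proof. intros. apply continuity_pt_filterlim, continuity_pt_clamp; auto. Qed.

Lemma ex_RInt_cont01 g a b : cont01 g -> in01 a -> in01 b -> ex_RInt g a b.
Proof.
  intros Hg Ha Hb.
  apply (ex_RInt_ext (fun t => g (clamp t))).
  - intros x Hx. rewrite clamp_id; auto. apply (in01_interval x a b); auto; lra.
  - apply (ex_RInt_continuous (V:=R_CompleteNormedModule)). intros; apply continuous_clamp; auto.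
Qed.

Lemma Int01_RInt g : cont01 g -> Int01 g = RInt g 0 1.
Proof.
  intros Hg. unfold Int01.
  assert (E : ex_RInt g 0 1) by (apply ex_RInt_cont01; auto; red; lra).
  destruct (epsilon_spec (inhabits 0)
     (fun I => exists pr : Riemann_integrable g 0 1, RiemannInt pr = I))
    as [pr Hpr].
  - exists (RiemannInt (ex_RInt_Reals_0 _ _ _ E)). eauto.
  - rewrite <- Hpr. symmetry. apply RInt_Reals.
Qed.

Lemma cont01_plus f g : cont01 f -> cont01 g -> cont01 (fun x => f x + g x).
Proof. intros Hf Hg x Hx. apply limit_plus; auto. Qed.

Lemma cont01_minus f g : cont01 f -> cont01 g -> cont01 (fun x => f x - g x).
Proof. intros Hf Hg x Hx. apply limit_minus; auto. Qed.

Lemma cont01_mult f g : cont01 f -> cont01 g -> cont01 (fun x => f x * g x).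
Proof. intros Hf Hg x Hx. apply limit_mul; auto. Qed.

Lemma cont01_const c : cont01 (fun _ => c).
Proof.
  intros x Hx eps He. exists 1; split; [lra|]. intros t _. simpl. unfold Rdist.
  replace (c - c) with 0 by ring. rewrite Rabs_R0; lra.
Qed.

Lemma cont01_id : cont01 (fun x => x).
Proof. intros x Hx eps He. exists eps; split; auto. intros t [_ Ht]; auto. Qed.

Lemma cont01_pow f n : cont01 f -> cont01 (fun x => f x ^ n).
Proof. intros Hf. induction n; simpl. apply cont01_const. apply cont01_mult; auto. Qed.

Lemma cont01_sum (F : nat -> R -> R) n :
  (forall k, (k <= n)%nat -> cont01 (F k)) -> cont01 (fun x => sum_f_R0 (fun k => F k x) n).
Proof.
  induction n; intros H; simpl. apply H; lia.
  apply cont01_plus. apply IHn; intros; apply H; lia. apply H; lia.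
Qed.

Lemma interior_near x d : in01 x -> d > 0 -> exists t, 0 < t < 1 /\ Rabs (t - x) < d.
Proof.
  intros Hx Hd. unfold in01 in Hx. set (e := Rmin d (1/2) / 2).
  assert (0 < Rmin d (1/2)) by (apply Rmin_pos; lra).
  pose proof (Rmin_l d (1/2)); pose proof (Rmin_r d (1/2)).
  assert (0 < e <= 1/4 /\ e < d) by (unfold e; lra).
  destruct (Rle_dec x (1/2)).
  - exists (x + e). split. lra. replace (x + e - x) with e by ring. rewrite Rabs_pos_eq; lra.
  - exists (x - e). split. lra. replace (x - e - x) with (-e) by ring.
    rewrite Rabs_Ropp, Rabs_pos_eq; lra.
Qed.

Lemma cont01_Rabs_le h B : cont01 h -> (forall t, 0 < t < 1 -> Rabs (h t) <= B) ->
  forall x, in01 x -> Rabs (h x) <= B.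
Proof.
  intros Hh Hb x Hx. apply Rnot_lt_le. intros Hlt.
  destruct (Hh x Hx (Rabs (h x) - B)) as [d [Hd H]]. lra.
  destruct (interior_near x d Hx Hd) as [t [Ht1 Ht2]].
  assert (K : R_dist (h t) (h x) < Rabs (h x) - B) by (apply H; split; [red; lra | exact Ht2]).
  unfold R_dist in K. specialize (Hb t Ht1).
  pose proof (Rabs_triang_inv (h x) (h t)). rewrite Rabs_minus_sym in K. lra.
Qed.

Lemma cont01_eq f g : cont01 f -> cont01 g -> (forall t, 0 < t < 1 -> f t = g t) ->
  forall x, in01 x -> f x = g x.
Proof.
  intros Hf Hg E x Hx.
  assert (H : forall e, e > 0 -> Rabs (f x - g x) <= e).
  { intros e He. apply (cont01_Rabs_le (fun t => f t - g t)); auto. apply cont01_minus; auto.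
    intros t Ht. rewrite E, Rminus_diag, Rabs_R0; lra. }
  destruct (Req_dec (f x - g x) 0). lra.
  assert (0 < Rabs (f x - g x)) by (apply Rabs_pos_lt; auto).
  specialize (H (Rabs (f x - g x) / 2)). lra.
Qed.

Definition unif_cvg01 (g : nat -> R -> R) (h : R -> R) : Prop :=
  forall eps, eps > 0 -> exists N, forall j, (N <= j)%nat -> forall x, in01 x ->
    Rabs (g j x - h x) <= eps.

Lemma ex_bound_le_all (P : nat -> nat -> Prop) n :
  (forall k N N', (N <= N')%nat -> P k N -> P k N') ->
  (forall k, (k <= n)%nat -> exists N, P k N) -> exists N, forall k, (k <= n)%nat -> P k N.
Proof.
  intros Hm H. induction n.
  - destruct (H 0%nat (le_n 0)) as [N HN]. exists N. intros k Hk. replace k with 0%nat by lia. auto.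
  - destruct IHn as [N1 H1]. intros; apply H; lia.
    destruct (H (S n) (le_n _)) as [N2 H2]. exists (max N1 N2). intros k Hk.
    destruct (Nat.eq_dec k (S n)) as [->|]. apply (Hm _ N2); auto; lia.
    apply (Hm _ N1); auto. lia. apply H1; lia.
Qed.

Lemma unif_cvg01_finite (g : nat -> nat -> R -> R) (h : nat -> R -> R) :
  (forall m, unif_cvg01 (fun j => g j m) (h m)) ->
  forall N d, d > 0 -> exists J, forall m, (m <= N)%nat -> forall j, (J <= j)%nat ->
    forall x, in01 x -> Rabs (g j m x - h m x) <= d.
Proof.
  intros H N d Hd.
  apply (ex_bound_le_all (fun m J => forall j, (J <= j)%nat -> forall x, in01 x ->
                                       Rabs (g j m x - h m x) <= d)).
  - intros m J J' HJ P j Hj. apply P. lia.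
  - intros m _. apply H; auto.
Qed.

Lemma cont01_unif_limit g h : (forall j, cont01 (g j)) -> unif_cvg01 g h -> cont01 h.
Proof.
  intros Hg Hcv x Hx eps He.
  destruct (Hcv (eps / 3) ltac:(lra)) as [N HN].
  destruct (Hg N x Hx (eps / 3) ltac:(lra)) as [d [Hd Hc]].
  exists d; split; auto. intros t [Ht Htx]. simpl in *. unfold R_dist in *.
  specialize (Hc t (conj Ht Htx)). pose proof (HN N (le_n N) t Ht). pose proof (HN N (le_n N) x Hx).
  replace (h t - h x) with (- (g N t - h t) + (g N t - g N x) + (g N x - h x)) by ring.
  pose proof (Rabs_triang (- (g N t - h t) + (g N t - g N x)) (g N x - h x)).
  pose proof (Rabs_triang (- (g N t - h t)) (g N t - g N x)).
  rewrite Rabs_Ropp in *. lra.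
Qed.

(** * Calculus on [0,1] *)

Lemma derivable_pt_lim_loc01 (f g : R -> R) x l :
  0 < x < 1 -> (forall t, 0 < t < 1 -> f t = g t) ->
  derivable_pt_lim f x l -> derivable_pt_lim g x l.
Proof.
  intros Hx E H. apply is_derive_Reals. apply is_derive_Reals in H.
  apply (is_derive_ext_loc f); auto.
  assert (Hd : 0 < Rmin x (1 - x)) by (apply Rmin_pos; lra).
  exists (mkposreal _ Hd). intros t Ht. apply E.
  unfold ball in Ht; simpl in Ht; unfold AbsRing_ball, abs, minus, plus, opp in Ht; simpl in Ht.
  pose proof (Rmin_l x (1-x)); pose proof (Rmin_r x (1-x)).
  unfold Rabs in Ht; destruct Rcase_abs in Ht; lra.
Qed.

Lemma is_derive_RInt_clamp h : cont01 h ->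
  forall t, is_derive (fun s => RInt (fun y => h (clamp y)) 0 s) t (h (clamp t)).
Proof.
  intros Hh t.
  apply (is_derive_RInt (V:=R_CompleteNormedModule) (fun y => h (clamp y)) _ 0).
  - apply filter_forall. intros s. apply (RInt_correct (V:=R_CompleteNormedModule)).
    apply (ex_RInt_continuous (V:=R_CompleteNormedModule)). intros; apply continuous_clamp; auto.
  - apply continuous_clamp; auto.
Qed.

Lemma RInt_clamp (h : R -> R) x : in01 x -> RInt h 0 x = RInt (fun y => h (clamp y)) 0 x.
Proof.
  intros Hx. apply (RInt_ext (V:=R_CompleteNormedModule)). intros y Hy. rewrite clamp_id; auto.
  apply (in01_interval y 0 x); auto; [red|]; lra.
Qed.

(* The clamped primitive is continuous on all of R, as [null_derivative_loc] requires. *)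
Lemma ftc01 (h h' : R -> R) :
  cont01 h -> cont01 h' -> (forall x, 0 < x < 1 -> derivable_pt_lim h x (h' x)) ->
  forall x, in01 x -> h x = h 0 + RInt h' 0 x.
Proof.
  intros Hh Hh' Hd x Hx.
  set (Phi := fun t => h (clamp t) - RInt (fun y => h' (clamp y)) 0 t).
  assert (HD : forall t, 0 < t < 1 -> derivable_pt_lim Phi t 0).
  { intros t Ht. replace 0 with (h' t - h' (clamp t)) by (rewrite clamp_id; [ring | red; lra]).
    apply derivable_pt_lim_minus.
    - apply (derivable_pt_lim_loc01 h); auto. intros; rewrite clamp_id; auto; red; lra.
    - apply is_derive_Reals, is_derive_RInt_clamp; auto. }
  assert (HC : forall t, continuity_pt Phi t).
  { intros t. apply continuity_pt_minus. apply continuity_pt_clamp; auto.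
    apply derivable_continuous_pt. eexists. apply is_derive_Reals, is_derive_RInt_clamp; auto. }
  assert (pr : forall t, 0 < t < 1 -> derivable_pt Phi t)
    by (intros t Ht; exists 0; exact (HD t Ht)).
  assert (Kc : constant_D_eq Phi (fun x => 0 <= x <= 1) (Phi 0)).
  { apply (null_derivative_loc Phi 0 1 pr); auto. intros t P. apply derive_pt_eq_0. auto. }
  specialize (Kc x Hx). unfold Phi in Kc. rewrite !clamp_id, RInt_point in Kc by (auto; red; lra).
  rewrite RInt_clamp; auto. unfold zero in Kc; simpl in Kc. lra.
Qed.

Lemma derivable_pt_lim_ftc01 g h : cont01 h -> (forall x, in01 x -> g x = g 0 + RInt h 0 x) ->
  forall x, 0 < x < 1 -> derivable_pt_lim g x (h x).
Proof.
  intros Hh E x Hx.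
  apply (derivable_pt_lim_loc01 (fun t => g 0 + RInt (fun y => h (clamp y)) 0 t)); auto.
  - intros t Ht. rewrite (E t), (RInt_clamp h t); auto; red; lra.
  - replace (h x) with (0 + h (clamp x)) by (rewrite clamp_id; [ring | red; lra]).
    apply derivable_pt_lim_plus. apply derivable_pt_lim_const.
    apply is_derive_Reals, is_derive_RInt_clamp; auto.
Qed.

Lemma Cinf01_cont u D n : Cinf01 u D -> cont01 (D n).
Proof. intros [_ [_ H]] x Hx; apply H; auto. Qed.

Lemma Cinf01_ftc u D n : Cinf01 u D -> forall x, in01 x -> D n x = D n 0 + RInt (D (S n)) 0 x.
Proof.
  intros H. apply ftc01; try (eapply Cinf01_cont; eauto). destruct H as [_ [H _]]; auto.
Qed.

Lemma Cinf01_unique u D1 D2 : Cinf01 u D1 -> Cinf01 u D2 ->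
  forall n x, in01 x -> D1 n x = D2 n x.
Proof.
  intros H1 H2 n. induction n; intros x Hx.
  - destruct H1 as [A _]; destruct H2 as [B _]. rewrite A, B; auto.
  - apply cont01_eq; try (eapply Cinf01_cont; eauto).
    intros t Ht. destruct H1 as [_ [D1d _]]; destruct H2 as [_ [D2d _]].
    eapply uniqueness_limite. apply D1d; auto.
    apply (derivable_pt_lim_loc01 (D2 n)); auto. intros; symmetry; apply IHn; red; lra. auto.
Qed.

Lemma Cinf01_ext g g' D : (forall x, in01 x -> g x = g' x) -> Cinf01 g D -> Cinf01 g' D.
Proof. intros E [A [B C]]. split; auto. intros x Hx. rewrite A, E; auto. Qed.

Lemma Cinf01_minus u v U V : Cinf01 u U -> Cinf01 v V ->
  Cinf01 (fun x => u x - v x) (fun m x => U m x - V m x).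
Proof.
  intros HU HV. split; [|split].
  - intros x Hx. destruct HU as [A _]; destruct HV as [B _]. rewrite A, B; auto.
  - intros n x Hx. apply derivable_pt_lim_minus; [apply HU | apply HV]; auto.
  - intros n. apply cont01_minus; eapply Cinf01_cont; eauto.
Qed.

(** * Riemann integrals of continuous functions *)

Lemma RInt_plus_R f g a b : ex_RInt f a b -> ex_RInt g a b ->
  RInt (fun x => f x + g x) a b = RInt f a b + RInt g a b.
Proof. intros. apply (RInt_plus (V:=R_CompleteNormedModule)); auto. Qed.

Lemma RInt_scal_R c f a b : ex_RInt f a b -> RInt (fun x => c * f x) a b = c * RInt f a b.
Proof. intros. apply (RInt_scal (V:=R_CompleteNormedModule)); auto. Qed.

Lemma RInt_const_R c a b : RInt (fun _ => c) a b = (b - a) * c.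
Proof. apply (RInt_const (V:=R_CompleteNormedModule)). Qed.

Lemma ex_RInt_sum (F : nat -> R -> R) n a b :
  (forall k, (k <= n)%nat -> ex_RInt (F k) a b) ->
  ex_RInt (fun x => sum_f_R0 (fun k => F k x) n) a b.
Proof.
  induction n; intros H; simpl. apply H; lia.
  apply (ex_RInt_plus (V:=R_NormedModule)). apply IHn; intros; apply H; lia. apply H; lia.
Qed.

Lemma RInt_sum (F : nat -> R -> R) n a b :
  (forall k, (k <= n)%nat -> ex_RInt (F k) a b) ->
  RInt (fun x => sum_f_R0 (fun k => F k x) n) a b = sum_f_R0 (fun k => RInt (F k) a b) n.
Proof.
  induction n; intros H; simpl. reflexivity.
  rewrite RInt_plus_R.
  - rewrite IHn; [reflexivity|]. intros; apply H; lia.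
  - apply ex_RInt_sum; intros; apply H; lia.
  - apply H; lia.
Qed.

Lemma RInt_nonneg f a b : a <= b -> ex_RInt f a b -> (forall x, a < x < b -> 0 <= f x) ->
  0 <= RInt f a b.
Proof.
  intros. rewrite <- (Rmult_0_r (b - a)), <- RInt_const_R. apply RInt_le; auto.
  apply (ex_RInt_const (V:=R_NormedModule)).
Qed.

Lemma RInt_sqr_nonneg h a b : cont01 h -> in01 a -> in01 b -> a <= b ->
  0 <= RInt (fun x => h x ^ 2) a b.
Proof.
  intros. apply RInt_nonneg; auto. apply ex_RInt_cont01; auto. apply cont01_pow; auto.
  intros; apply pow2_ge_0.
Qed.

(* Expand [0 <= RInt (h - c / L)^2] with [c = RInt h], [L = b - a]. *)
Lemma RInt_Cauchy_Schwarz h a b : cont01 h -> in01 a -> in01 b -> a <= b ->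
  (RInt h a b) ^ 2 <= (b - a) * RInt (fun x => h x ^ 2) a b.
Proof.
  intros Hh Ha Hb Hab.
  assert (E1 : ex_RInt h a b) by (apply ex_RInt_cont01; auto).
  assert (E2 : ex_RInt (fun x => h x ^ 2) a b)
    by (apply ex_RInt_cont01; auto; apply cont01_pow; auto).
  destruct (Req_dec a b) as [<-|Hne].
  { rewrite RInt_point. unfold zero; simpl. lra. }
  set (L := b - a). assert (HL : 0 < L) by (unfold L; lra).
  set (c := RInt h a b). set (d := c / L).
  assert (P : 0 <= RInt (fun x => (h x - d) ^ 2) a b).
  { apply RInt_sqr_nonneg; auto. apply cont01_minus; auto. apply cont01_const. }
  assert (Ef : RInt (fun x => (h x - d) ^ 2) a b
               = RInt (fun x => h x ^ 2 + ((-2*d) * h x + d^2)) a b)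
    by (apply (RInt_ext (V:=R_CompleteNormedModule)); intros; simpl; ring).
  assert (E3 : ex_RInt (fun x => (-2*d) * h x) a b)
    by (apply (ex_RInt_scal (V:=R_NormedModule)); auto).
  assert (E4 : ex_RInt (fun _ : R => d^2) a b) by (apply (ex_RInt_const (V:=R_NormedModule))).
  assert (E5 : ex_RInt (fun x => (-2*d) * h x + d^2) a b)
    by (apply (ex_RInt_plus (V:=R_NormedModule)); auto).
  rewrite Ef, RInt_plus_R, RInt_plus_R, RInt_scal_R, RInt_const_R in P; auto.
  fold c L in P. unfold d in P.
  replace (L * RInt (fun x => h x ^ 2) a b) with
    (L * (RInt (fun x => h x ^ 2) a b + (-2 * (c / L) * c + L * (c / L) ^ 2)) + c ^ 2)
    by (field; lra).
  assert (0 <= L * (RInt (fun x => h x ^ 2) a b + (-2 * (c / L) * c + L * (c / L) ^ 2)))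
    by (apply Rmult_le_pos; lra).
  lra.
Qed.

Lemma RInt_Chasles01 f a b c : cont01 f -> in01 a -> in01 b -> in01 c ->
  RInt f a b + RInt f b c = RInt f a c.
Proof.
  intros Hf Ha Hb Hc. apply (RInt_Chasles (V:=R_CompleteNormedModule)); apply ex_RInt_cont01; auto.
Qed.

Lemma RInt_sqr_le_01 h a b : cont01 h -> in01 a -> in01 b -> a <= b ->
  RInt (fun x => h x ^ 2) a b <= RInt (fun x => h x ^ 2) 0 1.
Proof.
  intros Hh Ha Hb Hab. assert (H2 : cont01 (fun x => h x ^ 2)) by (apply cont01_pow; auto).
  assert (I0 : in01 0) by (red; lra). assert (I1 : in01 1) by (red; lra).
  rewrite <- (RInt_Chasles01 _ 0 a 1), <- (RInt_Chasles01 _ a b 1); auto.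
  pose proof (RInt_sqr_nonneg h 0 a Hh I0 Ha ltac:(red in Ha; lra)).
  pose proof (RInt_sqr_nonneg h b 1 Hh Hb I1 ltac:(red in Hb; lra)).
  lra.
Qed.

Lemma RInt_sqr_le_sub h a b : cont01 h -> in01 a -> in01 b -> a <= b ->
  (RInt h a b) ^ 2 <= RInt (fun t => h t ^ 2) 0 1.
Proof.
  intros Hh Ha Hb Hab.
  eapply Rle_trans. apply RInt_Cauchy_Schwarz; auto.
  pose proof (RInt_sqr_nonneg h a b Hh Ha Hb Hab). pose proof (RInt_sqr_le_01 h a b Hh Ha Hb Hab).
  red in Ha, Hb. nra.
Qed.

(** * The Leibniz rule *)

Fixpoint binom (n k : nat) : R :=
  match n, k with
  | O, O => 1
  | O, S _ => 0
  | S _, O => 1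
  | S n', S k' => binom n' k' + binom n' (S k')
  end.

Lemma binom_gt n k : (n < k)%nat -> binom n k = 0.
Proof.
  revert k; induction n; intros k H; destruct k; simpl; try lia; auto.
  rewrite !IHn; try lia. ring.
Qed.

Lemma binom_n0 n : binom n 0 = 1.
Proof. destruct n; reflexivity. Qed.

Lemma binom_fact n k : (k <= n)%nat ->
  binom n k * INR (fact k) * INR (fact (n - k)) = INR (fact n).
Proof.
  revert k; induction n; intros k Hk.
  - destruct k; [|lia]. simpl. lra.
  - destruct k.
    + rewrite binom_n0. simpl (fact 0). replace (S n - 0)%nat with (S n) by lia. simpl INR. ring.
    + simpl binom. replace (S n - S k)%nat with (n - k)%nat by lia.
      destruct (Nat.eq_dec k n) as [->|Hne].
      * rewrite (binom_gt n (S n)) by lia. replace (n - n)%nat with 0%nat by lia.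
        pose proof (IHn n (le_n n)) as H. replace (n - n)%nat with 0%nat in H by lia.
        simpl (fact 0) in *. change (INR 1) with 1 in *. rewrite fact_simpl, mult_INR.
        transitivity (INR (S n) * (binom n n * INR (fact n) * 1)); [ring|]. rewrite H; ring.
      * pose proof (IHn k ltac:(lia)) as A. pose proof (IHn (S k) ltac:(lia)) as B.
        replace (n - k)%nat with (S (n - S k)) in A |- * by lia.
        rewrite (fact_simpl (n - S k)) in A |- *. rewrite (fact_simpl k) in B |- *.
        rewrite (fact_simpl n). rewrite !mult_INR in *.
        set (a := INR (fact k)) in *. set (b := INR (fact (n - S k))) in *.
        assert (E1 : INR (S (n - S k)) = INR n - INR k)
          by (rewrite S_INR, minus_INR by lia; rewrite S_INR; ring).
        rewrite E1 in A |- *. rewrite !S_INR in *.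
        transitivity ((binom n k * a * ((INR n - INR k) * b)) * (INR k + 1)
          + (binom n (S k) * ((INR k + 1) * a) * b) * (INR n - INR k)).
        ring. rewrite A, B. ring.
Qed.

Definition leibniz (F U : nat -> R -> R) (n : nat) (x : R) : R :=
  sum_f_R0 (fun k => binom n k * F k x * U (n - k)%nat x) n.

Lemma leibniz_S (F U : nat -> R -> R) n x :
  sum_f_R0 (fun k => binom n k * (F (S k) x * U (n - k)%nat x + F k x * U (S n - k)%nat x)) n
  = leibniz F U (S n) x.
Proof.
  unfold leibniz.
  rewrite (decomp_sum _ (S n)) by lia. simpl pred.
  rewrite (sum_eq (fun i => binom (S n) (S i) * F (S i) x * U (S n - S i)%nat x)
                  (fun i => binom n i * F (S i) x * U (n - i)%nat x
                              + binom n (S i) * F (S i) x * U (S n - S i)%nat x)).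
  2:{ intros i Hi. simpl binom. replace (S n - S i)%nat with (n - i)%nat by lia. ring. }
  rewrite plus_sum.
  rewrite (sum_eq _
    (fun k => binom n k * F (S k) x * U (n - k)%nat x + binom n k * F k x * U (S n - k)%nat x))
    by (intros; ring).
  rewrite plus_sum.
  assert (E : sum_f_R0 (fun k => binom n k * F k x * U (S n - k)%nat x) n =
     binom (S n) 0 * F 0%nat x * U (S n - 0)%nat x
     + sum_f_R0 (fun i => binom n (S i) * F (S i) x * U (S n - S i)%nat x) n).
  { rewrite <- (Rplus_0_r (sum_f_R0 _ n)).
    replace 0 with (binom n (S n) * F (S n) x * U (S n - S n)%nat x) at 1
      by (rewrite binom_gt by lia; ring).
    rewrite <- tech5. rewrite (decomp_sum _ (S n)) by lia. simpl pred.
    rewrite !binom_n0. reflexivity. }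
  rewrite E. ring.
Qed.

Lemma derivable_pt_lim_sum (g : nat -> R -> R) (g' : nat -> R) m x :
  (forall k, (k <= m)%nat -> derivable_pt_lim (g k) x (g' k)) ->
  derivable_pt_lim (fun y => sum_f_R0 (fun k => g k y) m) x (sum_f_R0 g' m).
Proof.
  induction m; intros H; simpl. apply H; lia.
  apply (derivable_pt_lim_plus (fun y => sum_f_R0 (fun k => g k y) m) (g (S m))).
  apply IHm; intros; apply H; lia. apply H; lia.
Qed.

Lemma cont01_leibniz F U n : (forall k, cont01 (F k)) -> (forall m, cont01 (U m)) ->
  cont01 (leibniz F U n).
Proof.
  intros HF HU. apply (cont01_sum (fun k x => binom n k * F k x * U (n - k)%nat x)).
  intros. apply cont01_mult; auto. apply cont01_mult; auto. apply cont01_const.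
Qed.

Lemma Cinf01_mult f u F U : Cinf01 f F -> Cinf01 u U ->
  Cinf01 (fun x => f x * u x) (leibniz F U).
Proof.
  intros HF HU. split; [|split].
  - intros x Hx. unfold leibniz. simpl. destruct HF as [A _]; destruct HU as [B _].
    rewrite A, B; auto. ring.
  - intros n x Hx. rewrite <- leibniz_S. unfold leibniz.
    apply derivable_pt_lim_sum. intros k Hk.
    destruct HF as [_ [HF _]]; destruct HU as [_ [HU _]].
    replace (binom n k * (F (S k) x * U (n - k)%nat x + F k x * U (S n - k)%nat x)) with
      (binom n k * F (S k) x * U (n - k)%nat x + binom n k * F k x * U (S (n - k)) x)
      by (replace (S (n - k)) with (S n - k)%nat by lia; ring).
    apply (derivable_pt_lim_mult (mult_real_fct (binom n k) (F k)) (U (n - k)%nat)).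
    apply derivable_pt_lim_scal, HF; auto. apply HU; auto.
  - intros n. apply cont01_leibniz; intros; eapply Cinf01_cont; eauto.
Qed.

Lemma Cinf01_mult_minus f u v F U V : Cinf01 f F -> Cinf01 u U -> Cinf01 v V ->
  Cinf01 (fun x => f x * u x - f x * v x) (leibniz F (fun m x => U m x - V m x)).
Proof.
  intros HF HU HV. apply (Cinf01_ext (fun x => f x * (u x - v x))); [intros; ring|].
  apply Cinf01_mult, Cinf01_minus; auto.
Qed.

(** * Diagonal subsequences and the Arzela-Ascoli argument *)

Definition strict_incr (t : nat -> nat) : Prop := forall k, (t k < t (S k))%nat.

Lemma strict_incr_ge t : strict_incr t -> forall k, (k <= t k)%nat.
Proof. intros H k; induction k. lia. specialize (H k). lia. Qed.

Lemma strict_incr_le t : strict_incr t -> forall k k', (k <= k')%nat -> (t k <= t k')%nat.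
Proof. intros H k k' Hk. induction Hk. lia. specialize (H m). lia. Qed.

Lemma strict_incr_lt t : strict_incr t -> forall a b, (a < b)%nat -> (t a < t b)%nat.
Proof. intros H a b Hab. pose proof (strict_incr_le t H (S a) b Hab). specialize (H a). lia. Qed.

Lemma inv_succ_lt eps : eps > 0 -> exists N : nat, / (INR N + 1) < eps.
Proof.
  intros He. destruct (archimed_cor1 eps He) as [N [HN HN0]].
  exists (pred N). rewrite <- S_INR, Nat.succ_pred_pos by lia. auto.
Qed.

Lemma small_factor c eps : 0 <= c -> 0 < eps -> exists d, 0 < d <= 1 /\ c * d <= eps.
Proof.
  intros Hc He. assert (Hq : 0 < eps / (c + 1)) by (apply Rdiv_lt_0_compat; lra).
  exists (Rmin 1 (eps / (c + 1))). split; [split; [apply Rmin_pos; lra | apply Rmin_l] |].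
  apply Rle_trans with (c * (eps / (c + 1))). apply Rmult_le_compat_l; auto; apply Rmin_r.
  apply (Rmult_le_reg_r (c + 1)); [lra|]. unfold Rdiv.
  rewrite Rmult_assoc, (Rmult_assoc eps), Rinv_l by lra. nra.
Qed.

Fixpoint iter_sub (g : nat -> nat -> nat) (k : nat) : nat :=
  match k with O => g O O | S k' => g (S (iter_sub g k')) (S k') end.

Lemma cauchy_subseq (un : nat -> R) K : (forall n, Rabs (un n) <= K) ->
  exists th, strict_incr th /\ Cauchy_crit (fun k => un (th k)).
Proof.
  intros Hb.
  destruct (Bolzano_Weierstrass un (fun c => -K <= c <= K) (compact_P3 _ _)) as [l Hl].
  { intros n; specialize (Hb n); unfold Rabs in Hb; destruct Rcase_abs in Hb; lra. }
  assert (H : forall N k, exists p, (N <= p)%nat /\ Rabs (un p - l) < / (INR k + 1)).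
  { intros N k.
    assert (Hp : 0 < / (INR k + 1)) by (apply Rinv_0_lt_compat; pose proof (pos_INR k); lra).
    destruct (Hl (fun y => Rabs (y - l) < / (INR k + 1)) N) as [p [Hp1 Hp2]].
    - exists (mkposreal _ Hp). intros y Hy. unfold disc in Hy. simpl in Hy. auto.
    - exists p; auto. }
  set (g := fun N k => proj1_sig (constructive_indefinite_description _ (H N k))).
  assert (Hg : forall N k, (N <= g N k)%nat /\ Rabs (un (g N k) - l) < / (INR k + 1)).
  { intros; unfold g; destruct constructive_indefinite_description; auto. }
  exists (iter_sub g). split.
  - intros k. simpl. destruct (Hg (S (iter_sub g k)) (S k)). lia.
  - apply CV_Cauchy. exists l. intros eps He.
    destruct (inv_succ_lt eps He) as [N HN]. exists N. intros k Hk. unfold R_dist.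
    assert (Hk' : Rabs (un (iter_sub g k) - l) < / (INR k + 1)) by (destruct k; simpl; apply Hg).
    eapply Rlt_le_trans. apply Hk'. eapply Rle_trans. 2: left; apply HN.
    apply Rinv_le_contravar. pose proof (pos_INR N); lra. apply le_INR in Hk. lra.
Qed.

(* [nested_subseq E i] is the composition of the first [i] refinements chosen by [E]. *)
Fixpoint nested_subseq (E : (nat -> nat) -> nat -> nat -> nat) (i : nat) : nat -> nat :=
  match i with
  | O => fun j => j
  | S i' => fun j => nested_subseq E i' (E (nested_subseq E i') i' j)
  end.

Lemma diagonal_cauchy_subseq (a : nat -> nat -> R) (K : nat -> R) :
  (forall i j, Rabs (a i j) <= K i) ->
  exists phi, strict_incr phi /\ forall i, Cauchy_crit (fun j => a i (phi j)).
Proof.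
  intros Hb.
  assert (H : forall (ps : nat -> nat) i,
             exists th, strict_incr th /\ Cauchy_crit (fun j => a i (ps (th j)))).
  { intros ps i. apply (cauchy_subseq (fun j => a i (ps j)) (K i)). intros; apply Hb. }
  set (E := fun ps i => proj1_sig (constructive_indefinite_description _ (H ps i))).
  assert (HE : forall ps i, strict_incr (E ps i) /\ Cauchy_crit (fun j => a i (ps (E ps i j)))).
  { intros; unfold E; destruct constructive_indefinite_description; auto. }
  assert (Pinc : forall i, strict_incr (nested_subseq E i)).
  { induction i; intros k; simpl. lia. apply strict_incr_lt; auto. apply HE. }
  assert (Prange : forall i d j,
             exists s, (j <= s)%nat /\ nested_subseq E (d + i)%nat j = nested_subseq E i s).
  { intros i d; induction d; intros j. exists j; split; auto.
    simpl. destruct (IHd (E (nested_subseq E (d + i)%nat) (d + i)%nat j)) as [s [Hs1 Hs2]].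
    exists s; split; auto.
    pose proof (strict_incr_ge _ (proj1 (HE (nested_subseq E (d + i)%nat) (d + i)%nat)) j). lia. }
  exists (fun j => nested_subseq E (S j) j). split.
  - intros j. set (th := E (nested_subseq E j) j).
    assert (Hth : strict_incr th) by apply HE.
    pose proof (strict_incr_ge _ (proj1 (HE (nested_subseq E (S j)) (S j))) (S j)) as G.
    set (t2 := E (nested_subseq E (S j)) (S j) (S j)) in *.
    change (nested_subseq E j (th j) < nested_subseq E j (th t2))%nat.
    apply (strict_incr_lt _ (Pinc j)), (strict_incr_lt _ Hth). lia.
  - intros i eps He. destruct (proj2 (HE (nested_subseq E i) i) eps He) as [N HN].
    exists (max N i). intros n m Hn Hm.
    destruct (Prange (S i) (n - i)%nat n) as [s [Hs1 Hs2]].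
    destruct (Prange (S i) (m - i)%nat m) as [s' [Hs1' Hs2']].
    replace (n - i + S i)%nat with (S n) in Hs2 by lia.
    replace (m - i + S i)%nat with (S m) in Hs2' by lia.
    rewrite Hs2, Hs2'. simpl. apply HN; lia.
Qed.

Lemma nat_floor y N : 0 <= y <= INR N -> exists k, (k <= N)%nat /\ INR k <= y <= INR k + 1.
Proof.
  induction N; intros Hy. exists 0%nat; simpl in *; split; [lia|lra].
  destruct (Rle_dec y (INR N)).
  - destruct IHN as [k [Hk Hk']]. lra. exists k; split; [lia|lra].
  - exists N. split. lia. rewrite S_INR in Hy. lra.
Qed.

Lemma grid_in01 k l : (k <= S l)%nat -> in01 (INR k / INR (S l)).
Proof.
  intros Hk. assert (HL : 0 < INR (S l)) by (apply lt_0_INR; lia).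
  apply le_INR in Hk. split.
  - unfold Rdiv; apply Rle_mult_inv_pos; [apply pos_INR | auto].
  - apply (Rmult_le_reg_r (INR (S l))); auto. unfold Rdiv.
    rewrite Rmult_assoc, Rinv_l, Rmult_1_r, Rmult_1_l; lra.
Qed.

Lemma grid_approx x l : in01 x -> exists k, (k <= S l)%nat /\
  Rabs (x - INR k / INR (S l)) <= / INR (S l).
Proof.
  intros Hx. assert (HL : 0 < INR (S l)) by (apply lt_0_INR; lia).
  destruct (nat_floor (x * INR (S l)) (S l)) as [k [Hk Hk']].
  { unfold in01 in Hx. split. apply Rmult_le_pos; lra. nra. }
  exists k. split; auto.
  replace (x - INR k / INR (S l)) with ((x * INR (S l) - INR k) * / INR (S l)) by (field; lra).
  rewrite Rabs_mult, (Rabs_pos_eq (/ _)) by (left; apply Rinv_0_lt_compat; lra).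
  rewrite <- (Rmult_1_l (/ INR (S l))) at 2. apply Rmult_le_compat_r.
  left; apply Rinv_0_lt_compat; lra. apply Rabs_le. lra.
Qed.

(* Pointwise Cauchy on the grids [k / (l+1)] and a common Lipschitz constant give
   uniform Cauchy on [0,1]: an [eps/3] argument through the nearest grid point. *)
Lemma equilipschitz_unif_cauchy (g : nat -> R -> R) L : 0 <= L ->
  (forall j x y, in01 x -> in01 y -> Rabs (g j x - g j y) <= L * Rabs (x - y)) ->
  (forall k l, (k <= S l)%nat -> Cauchy_crit (fun j => g j (INR k / INR (S l)))) ->
  forall eps, eps > 0 -> exists N, forall j j', (N <= j)%nat -> (N <= j')%nat ->
    forall x, in01 x -> Rabs (g j x - g j' x) < eps.
Proof.
  intros HL Hlip Hgrid eps He.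
  destruct (inv_succ_lt (eps / (3 * (L + 1)))) as [l Hl].
  { apply Rdiv_lt_0_compat; lra. }
  rewrite <- S_INR in Hl.
  destruct (ex_bound_le_all (fun k N => forall j j', (N <= j)%nat -> (N <= j')%nat ->
     Rabs (g j (INR k / INR (S l)) - g j' (INR k / INR (S l))) < eps / 3) (S l)) as [N HN].
  { intros k N N' HNN' HP j j' Hj Hj'. apply HP; lia. }
  { intros k Hk. destruct (Hgrid k l Hk (eps / 3)) as [N HN]; [lra|].
    exists N. intros j j' Hj Hj'. apply HN; auto. }
  exists N. intros j j' Hj Hj' x Hx.
  destruct (grid_approx x l Hx) as [k [Hk Hd]].
  set (p := INR k / INR (S l)) in *. pose proof (grid_in01 k l Hk) as Hp.
  specialize (HN k Hk j j' Hj Hj'). fold p in HN.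
  pose proof (Hlip j x p Hx Hp) as L1. pose proof (Hlip j' p x Hp Hx) as L2.
  rewrite (Rabs_minus_sym p x) in L2.
  assert (Hbd : L * Rabs (x - p) <= eps / 3).
  { apply Rle_trans with (L * (eps / (3 * (L + 1)))).
    apply Rmult_le_compat_l; lra.
    replace (L * (eps / (3 * (L + 1)))) with ((eps / 3) * (L / (L + 1))) by (field; lra).
    assert (L / (L + 1) <= 1).
    { apply (Rmult_le_reg_r (L + 1)). lra. unfold Rdiv. rewrite Rmult_assoc, Rinv_l; lra. }
    assert (0 <= L / (L + 1)) by (apply Rle_mult_inv_pos; lra). nra. }
  replace (g j x - g j' x) with
    ((g j x - g j p) + (g j p - g j' p) + (g j' p - g j' x)) by ring.
  pose proof (Rabs_triang (g j x - g j p + (g j p - g j' p)) (g j' p - g j' x)).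
  pose proof (Rabs_triang (g j x - g j p) (g j p - g j' p)). lra.
Qed.

Lemma unif_cauchy01_cvg (g : nat -> R -> R) :
  (forall eps, eps > 0 -> exists N, forall j j', (N <= j)%nat -> (N <= j')%nat ->
     forall x, in01 x -> Rabs (g j x - g j' x) < eps) ->
  exists h, unif_cvg01 g h.
Proof.
  intros UC.
  assert (HC : forall x, Cauchy_crit (fun j => g j (clamp x))).
  { intros x eps He. destruct (UC eps He) as [N HN]. exists N. intros n n' Hn Hn'.
    apply HN; auto. apply clamp_in01. }
  exists (fun x => proj1_sig (Rcomplete.R_complete _ (HC x))).
  intros eps He. destruct (UC eps He) as [N HN]. exists N. intros j Hj x Hx.
  destruct (Rcomplete.R_complete _ (HC x)) as [c Hcv]. simpl.
  apply Rle_plus_epsilon. intros d Hd.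
  destruct (Hcv d Hd) as [N' HN']. specialize (HN' (max N N') (Nat.le_max_r _ _)).
  unfold R_dist in HN'. rewrite clamp_id in HN' by auto.
  specialize (HN j (max N N') Hj (Nat.le_max_l _ _) x Hx).
  pose proof (Rabs_triang (g j x - g (max N N') x) (g (max N N') x - c)).
  replace (g j x - g (max N N') x + (g (max N N') x - c)) with (g j x - c) in * by ring.
  lra.
Qed.

(* Grid points are enumerated by [of_nat]: index [p] codes the pair [(k, l)]. *)
Definition grid_pt (p : nat) : R := let (k, l) := of_nat p in clamp (INR k / INR (S l)).

Lemma arzela_ascoli_diag (U : nat -> nat -> R -> R) (B : nat -> R) :
  (forall j m x, in01 x -> Rabs (U j m x) <= B m) ->
  (forall j m x y, in01 x -> in01 y -> Rabs (U j m x - U j m y) <= B (S m) * Rabs (x - y)) ->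
  exists phi V, strict_incr phi /\ forall m, unif_cvg01 (fun j => U (phi j) m) (V m).
Proof.
  intros Hb Hl.
  set (a := fun i j => U j (fst (of_nat i)) (grid_pt (snd (of_nat i)))).
  destruct (diagonal_cauchy_subseq a (fun i => B (fst (of_nat i)))) as [phi [Hphi Hc]].
  { intros i j. unfold a, grid_pt. destruct (of_nat (snd (of_nat i))). apply Hb, clamp_in01. }
  assert (HB : forall m, 0 <= B m).
  { intros m. specialize (Hb 0%nat m 0 ltac:(red; lra)). pose proof (Rabs_pos (U 0%nat m 0)). lra. }
  assert (Hcv : forall m, exists h, unif_cvg01 (fun j => U (phi j) m) h).
  { intros m. apply unif_cauchy01_cvg, (equilipschitz_unif_cauchy _ (B (S m))); auto.
    intros k l Hk. specialize (Hc (to_nat (m, to_nat (k, l)))).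
    unfold a, grid_pt in Hc. rewrite !cancel_of_to in Hc. cbn [fst snd] in Hc.
    rewrite !cancel_of_to, clamp_id in Hc by (apply grid_in01; auto). exact Hc. }
  exists phi, (fun m => proj1_sig (constructive_indefinite_description _ (Hcv m))).
  split; auto. intros m. destruct constructive_indefinite_description; auto.
Qed.

(** * The weighted Leibniz estimate *)

Notation factR k := (INR (fact k)).

Lemma fact_mul_le a b : factR a * factR b <= factR (a + b).
Proof.
  induction a. simpl. lra.
  replace (S a + b)%nat with (S (a + b)) by lia. rewrite !fact_simpl, !mult_INR.
  pose proof (INR_fact_lt_0 a); pose proof (INR_fact_lt_0 b); pose proof (INR_fact_lt_0 (a+b)).
  assert (INR (S a) <= INR (S (a + b))) by (apply le_INR; lia).
  pose proof (pos_INR (S a)).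
  apply Rle_trans with (INR (S a) * factR (a + b)). rewrite Rmult_assoc.
  apply Rmult_le_compat_l; auto.
  apply Rmult_le_compat_r; lra.
Qed.

(* With [r = sigma / sigma'], [gevrey_bound sigma r C k = C (k!)^2 / sigma'^k]. *)
Definition gevrey_bound (s r Cf : R) (k : nat) : R := Cf * factR k ^ 2 * (r / s) ^ k.

(* Cauchy-Schwarz in the Leibniz sum with the weights [r^k], of total mass at most
   [1 / (1 - r)], produces these coefficients. *)
Definition leibniz_weight (s r Cf : R) (n k : nat) : R :=
  / (1 - r) * (binom n k ^ 2 * gevrey_bound s r Cf k ^ 2 / r ^ k).

(* [ecoef s (S m) = coef s m]: the norm of X is built on the derivative. *)
Definition ecoef (s : R) (m : nat) : R := match m with O => 1 | S m' => coef s m' end.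

Definition leibniz_const (s r Cf : R) : R := Cf ^ 2 / (1 - r) * (1 + / s + s ^ 2 + s).

Lemma leibniz_weight_coef_eq s r Cf k m : 0 < s -> 0 < r < 1 ->
  coef s (k + m) * leibniz_weight s r Cf (k + m) k =
  Cf ^ 2 / (1 - r) * r ^ k * s ^ (2 * m) * factR k ^ 2 / (factR (S (k + m)) ^ 2 * factR m ^ 2).
Proof.
  intros Hs Hr. unfold coef, leibniz_weight, gevrey_bound.
  pose proof (binom_fact (k + m) k ltac:(lia)) as Hb. replace (k + m - k)%nat with m in Hb by lia.
  assert (Eb : binom (k + m) k = factR (k + m) / (factR k * factR m)).
  { pose proof (INR_fact_lt_0 k); pose proof (INR_fact_lt_0 m). rewrite <- Hb. field. lra. }
  rewrite Eb. replace (2 * (k + m))%nat with (k + k + (m + m))%nat by lia.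
  replace (2 * m)%nat with (m + m)%nat by lia.
  rewrite !pow_add.
  pose proof (INR_fact_lt_0 k); pose proof (INR_fact_lt_0 m).
  pose proof (INR_fact_lt_0 (k+m)); pose proof (INR_fact_lt_0 (S (k+m))).
  assert (0 < s ^ k) by (apply pow_lt; lra). assert (0 < s ^ m) by (apply pow_lt; lra).
  assert (0 < r ^ k) by (apply pow_lt; lra).
  assert (Ers : (r / s) ^ k = r ^ k / s ^ k)
    by (unfold Rdiv; rewrite Rpow_mult_distr, pow_inv; reflexivity).
  rewrite Ers. field. repeat split; lra.
Qed.

Lemma leibniz_weight_coef_le_0 s r Cf k : 0 < s -> 0 < r < 1 -> 0 < Cf ->
  coef s (k + 0) * (1 + INR (k + 0) / s) * leibniz_weight s r Cf (k + 0) k <=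
  leibniz_const s r Cf * r ^ k * ecoef s 0 / (INR (k + 0) + 1).
Proof.
  intros Hs Hr HC.
  replace (coef s (k + 0) * (1 + INR (k + 0) / s) * leibniz_weight s r Cf (k + 0) k) with
    ((1 + INR (k + 0) / s) * (coef s (k + 0) * leibniz_weight s r Cf (k + 0) k)) by ring.
  rewrite leibniz_weight_coef_eq by auto. unfold leibniz_const.
  assert (0 < r ^ k) by (apply pow_lt; lra).
  assert (HC2 : 0 < Cf ^ 2 / (1 - r)) by (apply Rdiv_lt_0_compat; [apply pow_lt|]; lra).
  set (A := Cf ^ 2 / (1 - r)) in *.
  pose proof (pos_INR (k + 0)) as Hn.
  replace (k + 0)%nat with k in * by lia. simpl ecoef. simpl pow at 2.
  replace (factR 0) with 1 by reflexivity.
  rewrite fact_simpl, mult_INR, S_INR. pose proof (INR_fact_lt_0 k).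
  set (F := factR k) in *. set (N := INR k) in *. set (R := r ^ k) in *.
  replace (A * R * 1 * F ^ 2 / (((N + 1) * F) ^ 2 * 1 ^ 2)) with (A * R / (N + 1) ^ 2)
    by (simpl; field; lra).
  apply Rle_trans with (A * R * (1 + / s + s ^ 2 + s) * 1 / (N + 1)); [|right; field; lra].
  replace ((1 + N / s) * (A * R / (N + 1) ^ 2)) with ((A * R) * ((1 + N / s) / (N + 1)) / (N + 1))
    by (field; lra).
  apply Rmult_le_compat_r. left; apply Rinv_0_lt_compat; lra.
  rewrite Rmult_1_r. apply Rmult_le_compat_l. nra.
  apply (Rmult_le_reg_r (N + 1)). lra. unfold Rdiv. rewrite Rmult_assoc, Rinv_l by lra.
  assert (0 < / s) by (apply Rinv_0_lt_compat; lra).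
  assert (0 < s ^ 2) by (apply pow_lt; lra). nra.
Qed.

Lemma weight_ratio_le s N a b c : 0 < s -> 0 <= N -> 0 < a -> 0 < b -> a * b <= c ->
  (s * s + s * (N + 1)) * (a * b) ^ 2 <= (N + 1 + 1) * (N + 1) ^ 2 * c ^ 2 * (1 + / s + s ^ 2 + s).
Proof.
  intros Hs HN Ha Hb Habc. set (L := 1 + / s + s ^ 2 + s).
  assert (HL : s * s + s <= L).
  { unfold L. assert (0 < / s) by (apply Rinv_0_lt_compat; lra). simpl. lra. }
  assert (P1 : (a * b) ^ 2 <= c ^ 2) by (assert (0 <= a * b) by nra; nra).
  assert (P2 : s * s + s * (N + 1) <= L * (N + 1)) by nra.
  assert (HL0 : 0 < L) by nra.
  assert (P3 : 0 <= L * (N + 1) * c ^ 2) by (apply Rmult_le_pos; [nra | apply pow2_ge_0]).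
  apply Rle_trans with (L * (N + 1) * c ^ 2).
  { apply Rle_trans with ((s * s + s * (N + 1)) * c ^ 2).
    apply Rmult_le_compat_l; nra. apply Rmult_le_compat_r; nra. }
  replace ((N + 1 + 1) * (N + 1) ^ 2 * c ^ 2 * L) with
    (L * (N + 1) * c ^ 2 * ((N + 1 + 1) * (N + 1))) by ring.
  assert (1 <= (N + 1 + 1) * (N + 1)) by nra. nra.
Qed.

Lemma leibniz_weight_coef_le_S s r Cf k m' : 0 < s -> 0 < r < 1 -> 0 < Cf ->
  coef s (k + S m') * (1 + INR (k + S m') / s) * leibniz_weight s r Cf (k + S m') k <=
  leibniz_const s r Cf * r ^ k * ecoef s (S m') / (INR (k + S m') + 1).
Proof.
  intros Hs Hr HC.
  replace (coef s (k + S m') * (1 + INR (k + S m') / s) * leibniz_weight s r Cf (k + S m') k) with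
    ((1 + INR (k + S m') / s) * (coef s (k + S m') * leibniz_weight s r Cf (k + S m') k)) by ring.
  rewrite leibniz_weight_coef_eq by auto. unfold leibniz_const.
  assert (0 < r ^ k) by (apply pow_lt; lra).
  assert (HC2 : 0 < Cf ^ 2 / (1 - r)) by (apply Rdiv_lt_0_compat; [apply pow_lt|]; lra).
  set (A := Cf ^ 2 / (1 - r)) in *.
  pose proof (pos_INR (k + S m')) as Hn.
  simpl ecoef. unfold coef.
  replace (k + S m')%nat with (S (k + m')) by lia.
  rewrite (fact_simpl (S (k + m'))), (fact_simpl (k + m')), !mult_INR.
  rewrite (fact_simpl m'), mult_INR.
  replace (2 * S m')%nat with (S (S (2 * m'))) by lia.
  pose proof (fact_mul_le k m') as FM.
  pose proof (INR_fact_lt_0 k); pose proof (INR_fact_lt_0 m'); pose proof (INR_fact_lt_0 (k + m')).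
  set (a := factR k) in *. set (b := factR m') in *. set (c := factR (k + m')) in *.
  rewrite !S_INR. set (N := INR (k + m')) in *. pose proof (pos_INR (k + m')) as HN. fold N in HN.
  replace (S (S (2 * m'))) with (2 + 2 * m')%nat by lia. rewrite pow_add.
  set (T := s ^ (2 * m')). assert (0 < T) by (apply pow_lt; lra).
  set (R := r ^ k) in *.
  set (L := 1 + / s + s ^ 2 + s) in *.
  assert (0 < L) by (unfold L; assert (0 < / s) by (apply Rinv_0_lt_compat; lra); nra).
  set (d := INR m' + 1). assert (Hd : 1 <= d) by (unfold d; pose proof (pos_INR m'); lra).
  set (Q := (s * s + s * (N + 1)) * (a * b) ^ 2 / ((N + 1 + 1) * (N + 1) ^ 2 * c ^ 2 * L)).
  match goal with |- ?lhs <= ?rhs =>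
    assert (EQ : lhs = rhs * Q);
      [unfold Q, d; pose proof (pos_INR m'); field; repeat split; try lra; nra|];
    rewrite EQ; apply Rle_trans with (rhs * 1); [|right; ring] end.
  apply Rmult_le_compat_l.
  { apply Rmult_le_pos; [|left; apply Rinv_0_lt_compat; lra].
    apply Rmult_le_pos. apply Rmult_le_pos. nra. nra.
    left. apply Rdiv_lt_0_compat. auto. assert (0 < d * b) by nra.
    apply Rmult_lt_0_compat; apply pow_lt; nra. }
  unfold Q. apply (Rmult_le_reg_r ((N + 1 + 1) * (N + 1) ^ 2 * c ^ 2 * L)).
  { repeat apply Rmult_lt_0_compat; try apply pow_lt; lra. }
  unfold Rdiv. rewrite Rmult_assoc, Rinv_l, Rmult_1_r, Rmult_1_l.
  2:{ apply Rgt_not_eq; unfold Rgt. repeat apply Rmult_lt_0_compat; try apply pow_lt; lra. }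
  apply weight_ratio_le; auto.
Qed.

(* Dividing by [(n+1)!^2] leaves the factor [1 / (n+1)] which makes the map compact. *)
Lemma leibniz_weight_coef_le s r Cf k m : 0 < s -> 0 < r < 1 -> 0 < Cf ->
  coef s (k + m) * (1 + INR (k + m) / s) * leibniz_weight s r Cf (k + m) k <=
  leibniz_const s r Cf * r ^ k * ecoef s m / (INR (k + m) + 1).
Proof.
  destruct m; [apply leibniz_weight_coef_le_0 | apply leibniz_weight_coef_le_S].
Qed.

Lemma sum_Cauchy_Schwarz (b w : nat -> R) n : (forall k, 0 < w k) ->
  (sum_f_R0 b n) ^ 2 <= sum_f_R0 w n * sum_f_R0 (fun k => b k ^ 2 / w k) n.
Proof.
  intros Hw. induction n.
  - cbn [sum_f_R0]. specialize (Hw 0%nat).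
    replace (w 0%nat * (b 0%nat ^ 2 / w 0%nat)) with (b 0%nat ^ 2) by (field; lra). lra.
  - rewrite !tech5. set (SS := sum_f_R0 b n) in *. set (W := sum_f_R0 w n) in *.
    set (T := sum_f_R0 (fun k => b k ^ 2 / w k) n) in *.
    assert (HW : 0 < W).
    { unfold W. clear -Hw. induction n; simpl. apply Hw. specialize (Hw (S n)). lra. }
    pose proof (Hw (S n)) as Hwn. set (bb := b (S n)) in *. set (ww := w (S n)) in *.
    set (y := bb / ww). replace bb with (ww * y) by (unfold y; field; lra).
    replace ((ww * y) ^ 2 / ww) with (ww * y ^ 2) by (field; lra).
    assert (K : 0 <= W * y ^ 2 + T - 2 * SS * y).
    { assert (E : W * (W * y ^ 2 + T - 2 * SS * y) = (W * y - SS) ^ 2 + (W * T - SS ^ 2)) by ring.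
      assert (0 <= (W * y - SS) ^ 2) by apply pow2_ge_0.
      assert (0 <= W * (W * y ^ 2 + T - 2 * SS * y)) by lra.
      apply (Rmult_le_reg_l W); lra. }
    assert (E2 : (W + ww) * (T + ww * y ^ 2) - (SS + ww * y) ^ 2 =
                 W * T - SS ^ 2 + ww * (W * y ^ 2 + T - 2 * SS * y)) by ring.
    assert (0 <= ww * (W * y ^ 2 + T - 2 * SS * y)) by (apply Rmult_le_pos; lra).
    lra.
Qed.

Lemma sum_geom_le r n : 0 < r < 1 -> sum_f_R0 (fun k => r ^ k) n <= / (1 - r).
Proof.
  intros Hr. rewrite tech3 by lra. unfold Rdiv. rewrite <- (Rmult_1_l (/ (1 - r))) at 2.
  apply Rmult_le_compat_r. left; apply Rinv_0_lt_compat; lra.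
  assert (0 < r ^ S n) by (apply pow_lt; lra). lra.
Qed.

Lemma leibniz_sqr_le s r Cf F Z n x : 0 < s -> 0 < r < 1 ->
  (forall k, Rabs (F k x) <= gevrey_bound s r Cf k) ->
  (leibniz F Z n x) ^ 2 <= sum_f_R0 (fun k => leibniz_weight s r Cf n k * Z (n - k)%nat x ^ 2) n.
Proof.
  intros Hs Hr HF. unfold leibniz.
  eapply Rle_trans. apply (sum_Cauchy_Schwarz _ (fun k => r ^ k)). intros; apply pow_lt; lra.
  assert (HT : 0 <= sum_f_R0 (fun k => (binom n k * F k x * Z (n - k)%nat x) ^ 2 / r ^ k) n).
  { apply cond_pos_sum. intros k. apply Rmult_le_pos. apply pow2_ge_0.
    left; apply Rinv_0_lt_compat, pow_lt; lra. }
  apply Rle_trans with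
    (/ (1 - r) * sum_f_R0 (fun k => (binom n k * F k x * Z (n - k)%nat x) ^ 2 / r ^ k) n).
  apply Rmult_le_compat_r; auto. apply sum_geom_le; auto.
  rewrite scal_sum. apply sum_Rle. intros k Hk. unfold leibniz_weight.
  assert (0 < r ^ k) by (apply pow_lt; lra).
  specialize (HF k). assert (HF2 : F k x ^ 2 <= gevrey_bound s r Cf k ^ 2).
  { rewrite <- pow2_abs. apply pow_incr. split. apply Rabs_pos. auto. }
  assert (0 < / (1 - r)) by (apply Rinv_0_lt_compat; lra).
  replace ((binom n k * F k x * Z (n - k)%nat x) ^ 2 / r ^ k * / (1 - r)) with
    (/ (1 - r) * (binom n k ^ 2 / r ^ k * Z (n - k)%nat x ^ 2) * F k x ^ 2) by (field; lra).
  replace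
    (/ (1 - r) * (binom n k ^ 2 * gevrey_bound s r Cf k ^ 2 / r ^ k) * Z (n - k)%nat x ^ 2) with
    (/ (1 - r) * (binom n k ^ 2 / r ^ k * Z (n - k)%nat x ^ 2) * gevrey_bound s r Cf k ^ 2)
      by (field; lra).
  apply Rmult_le_compat_l; auto.
  apply Rmult_le_pos. lra. apply Rmult_le_pos. apply Rmult_le_pos. apply pow2_ge_0.
  left; apply Rinv_0_lt_compat; lra. apply pow2_ge_0.
Qed.

(** * Energies and the norms of X and Y *)

(* The norms of X and Y are compared, term by term, with weighted sums of these energies. *)
Definition energy (s : R) (Z : nat -> R -> R) (m : nat) : R :=
  RInt (fun x => Z m x ^ 2) 0 1 + s * Z m 0 ^ 2.

Definition Xenergy (s : R) (D : nat -> R -> R) (N : nat) : R :=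
  sum_f_R0 (fun m => ecoef s m * energy s D m) N.

Definition Yenergy (s : R) (W : nat -> R -> R) (N : nat) : R :=
  sum_f_R0 (fun n => coef s n * (1 + INR n / s) * energy s W n) N.

Lemma coef_pos s n : 0 < s -> 0 < coef s n.
Proof.
  intros Hs. unfold coef. apply Rdiv_lt_0_compat. apply pow_lt; lra.
  apply Rmult_lt_0_compat; apply pow_lt; apply INR_fact_lt_0.
Qed.

Lemma ecoef_nonneg s m : 0 < s -> 0 <= ecoef s m.
Proof. intros. destruct m; simpl. lra. left; apply coef_pos; auto. Qed.

Lemma energy_nonneg s Z m : 0 < s -> cont01 (Z m) -> 0 <= energy s Z m.
Proof.
  intros Hs HZ. unfold energy. apply Rplus_le_le_0_compat.
  apply RInt_sqr_nonneg; auto; red; lra. apply Rmult_le_pos. lra. apply pow2_ge_0.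
Qed.

Lemma energy_ext s A B m : (forall x, in01 x -> A m x = B m x) -> energy s A m = energy s B m.
Proof.
  intros E. unfold energy. rewrite (E 0) by (red; lra).
  f_equal. apply (RInt_ext (V:=R_CompleteNormedModule)). intros x Hx.
  rewrite Rmin_left, Rmax_right in Hx by lra. rewrite E; [reflexivity | red; lra].
Qed.

Lemma energy_minus_le s A B m : 0 < s -> cont01 (A m) -> cont01 (B m) ->
  energy s (fun m x => A m x - B m x) m <= 2 * energy s A m + 2 * energy s B m.
Proof.
  intros Hs HA HB. unfold energy.
  assert (I : RInt (fun x => (A m x - B m x) ^ 2) 0 1
              <= RInt (fun x => 2 * A m x ^ 2 + 2 * B m x ^ 2) 0 1).
  { apply RInt_le. lra. apply ex_RInt_cont01; try (red; lra). apply cont01_pow, cont01_minus; auto.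
    apply ex_RInt_cont01; try (red; lra).
    apply cont01_plus; apply cont01_mult; try apply cont01_const; apply cont01_pow; auto.
    intros. assert (0 <= (A m x + B m x) ^ 2) by apply pow2_ge_0. nra. }
  rewrite RInt_plus_R, RInt_scal_R, RInt_scal_R in I.
  2,3: apply ex_RInt_cont01; try (red; lra); apply cont01_pow; auto.
  2,3: apply ex_RInt_cont01; try (red; lra);
       apply cont01_mult; try apply cont01_const; apply cont01_pow; auto.
  assert (s * (A m 0 - B m 0) ^ 2 <= s * (2 * A m 0 ^ 2 + 2 * B m 0 ^ 2)).
  { apply Rmult_le_compat_l. lra. assert (0 <= (A m 0 + B m 0) ^ 2) by apply pow2_ge_0. nra. }
  lra.
Qed.

Lemma energy_le_sup s Z m d : 0 < s -> cont01 (Z m) -> (forall x, in01 x -> Rabs (Z m x) <= d) ->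
  energy s Z m <= (1 + s) * d ^ 2.
Proof.
  intros Hs HZ Hd. unfold energy.
  assert (Sq : forall x, in01 x -> Z m x ^ 2 <= d ^ 2).
  { intros x Hx. rewrite <- pow2_abs. apply pow_incr. split. apply Rabs_pos. auto. }
  assert (I : RInt (fun x => Z m x ^ 2) 0 1 <= RInt (fun _ => d ^ 2) 0 1).
  { apply RInt_le. lra. apply ex_RInt_cont01; try (red; lra). apply cont01_pow; auto.
    apply ex_RInt_cont01; try (red; lra). apply cont01_const.
    intros; apply Sq; red; lra. }
  rewrite RInt_const_R in I. assert (I0 : in01 0) by (red; lra). specialize (Sq 0 I0).
  assert (s * Z m 0 ^ 2 <= s * d ^ 2) by (apply Rmult_le_compat_l; lra). lra.
Qed.

Lemma Xenergy_nonneg s D N : 0 < s -> (forall m, cont01 (D m)) -> 0 <= Xenergy s D N.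
Proof.
  intros Hs HD. apply cond_pos_sum. intros m.
  apply Rmult_le_pos; [apply ecoef_nonneg | apply energy_nonneg]; auto.
Qed.

Lemma Xenergy_ext s A B N : (forall m x, in01 x -> A m x = B m x) -> Xenergy s A N = Xenergy s B N.
Proof. intros E. apply sum_eq. intros m _. rewrite (energy_ext s A B m); auto. Qed.

Lemma Xenergy_minus_le s A B N : 0 < s -> (forall m, cont01 (A m)) -> (forall m, cont01 (B m)) ->
  Xenergy s (fun m x => A m x - B m x) N <= 2 * Xenergy s A N + 2 * Xenergy s B N.
Proof.
  intros Hs HA HB. unfold Xenergy.
  apply Rle_trans with
    (sum_f_R0 (fun m => ecoef s m * energy s A m * 2 + ecoef s m * energy s B m * 2) N).
  { apply sum_Rle. intros m _. pose proof (ecoef_nonneg s m Hs).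
    pose proof (energy_minus_le s A B m Hs (HA m) (HB m)). nra. }
  rewrite plus_sum, !scal_sum. lra.
Qed.

Lemma Xenergy_le_sup s Z N d : 0 < s -> (forall m, cont01 (Z m)) ->
  (forall m, (m <= N)%nat -> forall x, in01 x -> Rabs (Z m x) <= d) ->
  Xenergy s Z N <= (1 + s) * d ^ 2 * sum_f_R0 (ecoef s) N.
Proof.
  intros Hs HZ Hd. unfold Xenergy.
  replace ((1 + s) * d ^ 2 * sum_f_R0 (ecoef s) N) with
    (sum_f_R0 (fun m => ecoef s m * ((1 + s) * d ^ 2)) N) by (rewrite scal_sum; ring).
  apply sum_Rle. intros m Hm. apply Rmult_le_compat_l. apply ecoef_nonneg; auto.
  apply energy_le_sup; auto.
Qed.

Lemma bd_term_eq s G n : bd_term s G n = s * coef s n * G n 0 ^ 2.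
Proof.
  unfold bd_term, coef. rewrite pow_add. simpl (s ^ 1). field.
  repeat split; apply Rgt_not_eq; try apply pow_lt; apply INR_fact_lt_0.
Qed.

Lemma sn_term_RInt s k G n : cont01 (G n) ->
  sn_term s k 0 G n = coef s n * INR n ^ (k + 0) * RInt (fun x => (x / s) ^ k * G n x ^ 2) 0 1.
Proof.
  intros HG. unfold sn_term. rewrite Int01_RInt. reflexivity.
  apply cont01_mult. apply cont01_pow. apply cont01_mult. apply cont01_id. apply cont01_const.
  apply cont01_pow; auto.
Qed.

Lemma sn_term_nonneg s k G n : 0 < s -> cont01 (G n) -> 0 <= sn_term s k 0 G n.
Proof.
  intros Hs HG. rewrite sn_term_RInt by auto.
  apply Rmult_le_pos. apply Rmult_le_pos. left; apply coef_pos; auto. apply pow_le, pos_INR.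
  apply RInt_nonneg. lra. apply ex_RInt_cont01; try (red; lra).
  apply cont01_mult. apply cont01_pow. apply cont01_mult. apply cont01_id. apply cont01_const.
  apply cont01_pow; auto.
  intros x Hx. apply Rmult_le_pos. apply pow_le. apply Rle_mult_inv_pos; lra. apply pow2_ge_0.
Qed.

Lemma sn_term_0 s G n : cont01 (G n) ->
  sn_term s 0 0 G n = coef s n * RInt (fun x => G n x ^ 2) 0 1.
Proof.
  intros HG. rewrite sn_term_RInt by auto. simpl (INR n ^ (0 + 0)).
  rewrite Rmult_1_r. f_equal. apply RInt_ext. intros; simpl; ring.
Qed.

Lemma Y_term_le_energy s G n : 0 < s -> cont01 (G n) ->
  sn_term s 0 0 G n + sn_term s 1 0 G n + bd_term s G n <=
    coef s n * (1 + INR n / s) * energy s G n.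
Proof.
  intros Hs HG. rewrite sn_term_0, bd_term_eq, sn_term_RInt by auto. unfold energy.
  pose proof (coef_pos s n Hs). pose proof (pos_INR n).
  assert (Hm : RInt (fun x => (x / s) ^ 1 * G n x ^ 2) 0 1 <= RInt (fun x => / s * G n x ^ 2) 0 1).
  { apply RInt_le. lra.
    apply ex_RInt_cont01; try (red; lra). apply cont01_mult. apply cont01_pow. apply cont01_mult.
    apply cont01_id. apply cont01_const. apply cont01_pow; auto.
    apply ex_RInt_cont01; try (red; lra). apply cont01_mult. apply cont01_const.
    apply cont01_pow; auto.
    intros x Hx. apply Rmult_le_compat_r. apply pow2_ge_0. simpl. rewrite Rmult_1_r. unfold Rdiv.
    rewrite <- (Rmult_1_l (/ s)) at 2. apply Rmult_le_compat_r. left; apply Rinv_0_lt_compat; lra.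
    lra. }
  rewrite RInt_scal_R in Hm. 2:{ apply ex_RInt_cont01; try (red; lra). apply cont01_pow; auto. }
  simpl (INR n ^ (1 + 0)). rewrite Rmult_1_r.
  assert (0 <= coef s n * INR n) by (apply Rmult_le_pos; lra).
  apply Rle_trans with (coef s n * RInt (fun x => G n x ^ 2) 0 1
    + coef s n * INR n * (/ s * RInt (fun x => G n x ^ 2) 0 1) + s * coef s n * G n 0 ^ 2).
  apply Rplus_le_compat_r. apply Rplus_le_compat_l. apply Rmult_le_compat_l; auto.
  match goal with |- ?L <= ?R => assert (E : R - L = coef s n * INR n * G n 0 ^ 2)
    by (field; lra) end.
  assert (0 <= coef s n * INR n * G n 0 ^ 2) by (apply Rmult_le_pos; auto; apply pow2_ge_0). lra.
Qed.

Lemma YnormSq_le_Yenergy s w W W' A : 0 < s -> Cinf01 w W -> Cinf01 w W' ->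
  (forall N, Yenergy s W' N <= A) -> YnormSq_le s W A.
Proof.
  intros Hs HW HW' HA N. eapply Rle_trans. 2: apply (HA N).
  apply sum_Rle. intros n _.
  rewrite (energy_ext s W' W n) by (intros; eapply Cinf01_unique; eauto).
  apply Y_term_le_energy; auto. eapply Cinf01_cont; eauto.
Qed.

Lemma X_term_ge_energy s D n : 0 < s -> (forall m, cont01 (D m)) ->
  coef s n * energy s (dshift D) n <=
  sn_term s 0 0 (dshift D) n + sn_term s 1 0 (dshift D) n + sn_term s 2 0 (dshift D) n
  + bd_term s (dshift D) n.
Proof.
  intros Hs HD. assert (HG : cont01 (dshift D n)) by apply HD.
  rewrite sn_term_0, bd_term_eq by auto. unfold energy.
  pose proof (sn_term_nonneg s 1 (dshift D) n Hs HG).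
  pose proof (sn_term_nonneg s 2 (dshift D) n Hs HG).
  lra.
Qed.

Lemma X_energy_sum_le s D M N : 0 < s -> (forall m, cont01 (D m)) -> XnormSq_le s D M ->
  sum_f_R0 (fun n => coef s n * energy s (dshift D) n) N <= M.
Proof.
  intros Hs HD HX. eapply Rle_trans. 2: apply (HX N). unfold X_partial. apply sum_Rle.
  intros; apply X_term_ge_energy; auto.
Qed.

Lemma sum_f_R0_term_le (a : nat -> R) n : (forall k, 0 <= a k) -> a n <= sum_f_R0 a n.
Proof.
  intros H. destruct n. simpl; lra. rewrite tech5.
  assert (0 <= sum_f_R0 a n) by (apply cond_pos_sum; auto). lra.
Qed.

Lemma X_energy_term_le s D M n : 0 < s -> (forall m, cont01 (D m)) -> XnormSq_le s D M ->
  coef s n * energy s (dshift D) n <= M.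
Proof.
  intros Hs HD HX. eapply Rle_trans. 2: apply (X_energy_sum_le s D M n); auto.
  apply (sum_f_R0_term_le (fun n => coef s n * energy s (dshift D) n)). intros k.
  apply Rmult_le_pos. left; apply coef_pos; auto. apply energy_nonneg; auto. apply HD.
Qed.

Lemma Rabs_le_1_plus_sqr a : Rabs a <= 1 + a ^ 2.
Proof. unfold Rabs; destruct Rcase_abs; nra. Qed.

Section XBounds.
Variables (s M : R) (u : R -> R) (D : nat -> R -> R).
Hypothesis Hs : 0 < s.
Hypothesis HC : Cinf01 u D.
Hypothesis Hu1 : u 1 = 0.
Hypothesis HX : XnormSq_le s D M.

Let HD : forall m, cont01 (D m). Proof. intros; eapply Cinf01_cont; eauto. Qed.

Lemma X_bound_nonneg : 0 <= M.
Proof.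
  eapply Rle_trans. 2: apply (X_energy_term_le s D M 0 Hs HD HX).
  apply Rmult_le_pos. left; apply coef_pos; auto. apply energy_nonneg; auto. apply HD.
Qed.

Lemma RInt_sqr_D1_le : RInt (fun t => D 1 t ^ 2) 0 1 <= M.
Proof.
  pose proof (X_energy_term_le s D M 0 Hs HD HX) as H.
  replace (coef s 0) with 1 in H by (unfold coef; simpl; field).
  unfold energy, dshift in H.
  assert (0 <= s * D 1%nat 0 ^ 2) by (apply Rmult_le_pos; [lra|apply pow2_ge_0]). lra.
Qed.

Lemma poincare x : in01 x -> D 0 x ^ 2 <= RInt (fun t => D 1 t ^ 2) 0 1.
Proof.
  intros Hx. assert (I0 : in01 0) by (red; lra). assert (I1 : in01 1) by (red; lra).
  pose proof (Cinf01_ftc u D 0 HC x Hx) as A. pose proof (Cinf01_ftc u D 0 HC 1 I1) as B.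
  destruct HC as [H0 _]. rewrite H0, Hu1 in B by auto.
  pose proof (RInt_Chasles01 (D 1) 0 x 1 (HD 1) I0 Hx I1).
  replace (D 0 x) with (- RInt (D 1) x 1) by lra.
  rewrite <- Rsqr_pow2, <- Rsqr_neg, Rsqr_pow2. apply RInt_sqr_le_sub; auto. red in Hx; lra.
Qed.

Lemma Xenergy_le N : Xenergy s D N <= (2 + s) * M.
Proof.
  pose proof X_bound_nonneg as HM.
  assert (E0 : ecoef s 0 * energy s D 0 <= (1 + s) * M).
  { simpl ecoef. rewrite Rmult_1_l. unfold energy.
    assert (I0 : in01 0) by (red; lra).
    assert (Hint : RInt (fun x => D 0%nat x ^ 2) 0 1 <= RInt (fun _ => M) 0 1).
    { apply RInt_le. lra. apply ex_RInt_cont01; try (red; lra). apply cont01_pow; auto.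
      apply ex_RInt_cont01; try (red; lra). apply cont01_const.
      intros x Hx. eapply Rle_trans; [apply poincare; red; lra | apply RInt_sqr_D1_le]. }
    rewrite RInt_const_R in Hint. pose proof (poincare 0 I0).
    pose proof RInt_sqr_D1_le.
    assert (s * D 0%nat 0 ^ 2 <= s * M) by (apply Rmult_le_compat_l; lra). lra. }
  unfold Xenergy. destruct N. cbn [sum_f_R0]. lra.
  rewrite decomp_sum by lia. simpl pred.
  change (sum_f_R0 (fun i => ecoef s (S i) * energy s D (S i)) N) with
    (sum_f_R0 (fun n => coef s n * energy s (dshift D) n) N).
  pose proof (X_energy_sum_le s D M N Hs HD HX). lra.
Qed.

Definition X_sup_bound (m : nat) : R :=
  match m with O => 1 + M | S m' => 2 + M / (s * coef s m') + M / coef s (S m') end.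

Lemma X_sup_le m x : in01 x -> Rabs (D m x) <= X_sup_bound m.
Proof.
  intros Hx. destruct m as [|m'].
  - pose proof (Rabs_le_1_plus_sqr (D 0 x)). pose proof (poincare x Hx).
    pose proof RInt_sqr_D1_le. simpl. lra.
  - simpl X_sup_bound. rewrite (Cinf01_ftc u D (S m') HC x Hx).
    pose proof (coef_pos s m' Hs) as Hc0. pose proof (coef_pos s (S m') Hs) as Hc1.
    pose proof (X_energy_term_le s D M m' Hs HD HX) as E0.
    pose proof (X_energy_term_le s D M (S m') Hs HD HX) as E1.
    unfold energy, dshift in E0, E1.
    assert (A : D (S m') 0 ^ 2 <= M / (s * coef s m')).
    { pose proof (RInt_sqr_nonneg (D (S m')) 0 1 (HD _) ltac:(red; lra) ltac:(red; lra) ltac:(lra)).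
      apply (Rmult_le_reg_l (s * coef s m')). apply Rmult_lt_0_compat; lra.
      replace (s * coef s m' * (M / (s * coef s m'))) with M by (field; lra).
      assert (0 <= coef s m' * RInt (fun x => D (S m') x ^ 2) 0 1) by (apply Rmult_le_pos; lra).
      nra. }
    assert (B : RInt (D (S (S m'))) 0 x ^ 2 <= M / coef s (S m')).
    { eapply Rle_trans. apply RInt_sqr_le_sub; [apply HD | red; lra | exact Hx | red in Hx; lra].
      apply (Rmult_le_reg_l (coef s (S m'))). lra.
      replace (coef s (S m') * (M / coef s (S m'))) with M by (field; lra).
      assert (0 <= coef s (S m') * (s * D (S (S m')) 0 ^ 2)).
      { apply Rmult_le_pos. lra. apply Rmult_le_pos. lra. apply pow2_ge_0. }
      nra. }
    pose proof (Rabs_triang (D (S m') 0) (RInt (D (S (S m'))) 0 x)).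
    pose proof (Rabs_le_1_plus_sqr (D (S m') 0)).
    pose proof (Rabs_le_1_plus_sqr (RInt (D (S (S m'))) 0 x)). lra.
Qed.

Lemma X_lipschitz m x y : in01 x -> in01 y ->
  Rabs (D m x - D m y) <= X_sup_bound (S m) * Rabs (x - y).
Proof.
  intros Hx Hy. assert (I0 : in01 0) by (red; lra).
  rewrite (Cinf01_ftc u D m HC x Hx), (Cinf01_ftc u D m HC y Hy).
  replace (D m 0 + RInt (D (S m)) 0 x - (D m 0 + RInt (D (S m)) 0 y)) with (RInt (D (S m)) y x).
  2:{ pose proof (RInt_Chasles01 (D (S m)) 0 y x (HD _) I0 Hy Hx) as Ech. simpl in *. lra. }
  assert (HB : forall t, y <= t <= x \/ x <= t <= y -> Rabs (D (S m) t) <= X_sup_bound (S m)).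
  { intros t Ht. apply X_sup_le. red in Hx, Hy |- *. lra. }
  destruct (Rle_dec y x).
  - rewrite Rabs_pos_eq with (x := x - y) by lra. rewrite Rmult_comm.
    apply abs_RInt_le_const; auto. apply ex_RInt_cont01; auto.
  - rewrite <- (opp_RInt_swap (V:=R_CompleteNormedModule) (D (S m)) x y).
    2: apply ex_RInt_cont01; auto. change (opp (RInt (D (S m)) x y)) with (- RInt (D (S m)) x y).
    rewrite Rabs_Ropp.
    rewrite (Rabs_minus_sym x y), (Rabs_pos_eq (y - x)) by lra. rewrite Rmult_comm.
    apply abs_RInt_le_const; auto. lra. apply ex_RInt_cont01; auto.
Qed.

End XBounds.

(** * Weighted convolutions *)

Lemma sum_convolution_le (al be : nat -> R) N : (forall k, 0 <= al k) -> (forall k, 0 <= be k) ->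
  sum_f_R0 (fun n => sum_f_R0 (fun k => al k * be (n - k)%nat) n) N <=
    sum_f_R0 al N * sum_f_R0 be N.
Proof.
  intros Ha Hb. destruct N. simpl. lra.
  rewrite (cauchy_finite al be (S N)) by lia.
  assert (0 <= sum_f_R0 (fun k => sum_f_R0 (fun l => al (S (l + k)) * be (S N - l)%nat)
                                           (Init.Nat.pred (S N - k))) (Init.Nat.pred (S N))).
  { apply cond_pos_sum. intros k. apply cond_pos_sum. intros l. apply Rmult_le_pos; auto. }
  lra.
Qed.

Lemma sum_f_R0_le_index (a : nat -> R) p q : (forall k, 0 <= a k) -> (p <= q)%nat ->
  sum_f_R0 a p <= sum_f_R0 a q.
Proof.
  intros Ha H. induction H. lra. rewrite tech5. specialize (Ha (S m)). lra.
Qed.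

Lemma sum_scal_l (g : nat -> R) K N : sum_f_R0 (fun n => K * g n) N = K * sum_f_R0 g N.
Proof. rewrite scal_sum. apply sum_eq. intros; ring. Qed.

Definition trunc_seq (N1 : nat) (e : nat -> R) (m : nat) : R :=
  if Compare_dec.le_dec m N1 then e m else 0.

Lemma sum_trunc_le N1 e N : (forall k, 0 <= e k) -> sum_f_R0 (trunc_seq N1 e) N <= sum_f_R0 e N1.
Proof.
  intros He.
  assert (E : sum_f_R0 (trunc_seq N1 e) N = sum_f_R0 e (min N N1)).
  { induction N.
    - simpl. unfold trunc_seq. destruct Compare_dec.le_dec; [|lia].
      replace (min 0 N1) with 0%nat by lia. reflexivity.
    - rewrite tech5, IHN. unfold trunc_seq. destruct Compare_dec.le_dec.
      + replace (min (S N) N1) with (S (min N N1)) by lia. rewrite tech5.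
        replace (S (min N N1)) with (S N) by lia. reflexivity.
      + replace (min (S N) N1) with (min N N1) by lia. ring. }
  rewrite E. apply sum_f_R0_le_index; auto. lia.
Qed.

Lemma sum_geom_nonneg r n : 0 < r -> 0 <= sum_f_R0 (fun k => r ^ k) n.
Proof. intros. apply cond_pos_sum. intros; apply pow_le; lra. Qed.

Lemma convolution_tail_le (a e : nat -> R) (r K c A : R) (N N1 : nat) :
  0 < r < 1 -> 0 <= K -> 0 <= c -> (forall m, 0 <= a m) -> (forall m, 0 <= e m) ->
  (forall m, (m <= N1)%nat -> a m <= e m * c) ->
  sum_f_R0 a N <= A ->
  sum_f_R0 (fun n => K / (INR n + 1) * sum_f_R0 (fun k => r ^ k * a (n - k)%nat) n) N
  <= K / (1 - r) * (c * sum_f_R0 e N1 + A / (INR N1 + 1)).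
Proof.
  intros Hr HK Hc Ha He Hsm HA.
  set (b := fun m => trunc_seq N1 e m * c + a m / (INR N1 + 1)).
  assert (Hb : forall m, 0 <= b m).
  { intros m. unfold b, trunc_seq. destruct Compare_dec.le_dec.
    - apply Rplus_le_le_0_compat. apply Rmult_le_pos; auto. apply Rle_mult_inv_pos; auto.
      pose proof (pos_INR N1); lra.
    - rewrite Rmult_0_l, Rplus_0_l. apply Rle_mult_inv_pos; auto. pose proof (pos_INR N1); lra. }
  (* [a (n-k) / (n+1)] is at most [e (n-k) c] if [n - k <= N1],
     and [a (n-k) / (N1+1)] otherwise. *)
  apply Rle_trans with (sum_f_R0 (fun n => K * sum_f_R0 (fun k => r ^ k * b (n - k)%nat) n) N).
  { apply sum_Rle. intros n Hn. unfold Rdiv. rewrite Rmult_assoc. apply Rmult_le_compat_l; auto.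
    rewrite scal_sum. apply sum_Rle. intros k Hk.
    assert (0 <= r ^ k) by (apply pow_le; lra).
    rewrite Rmult_assoc. apply Rmult_le_compat_l; auto.
    pose proof (pos_INR n). pose proof (pos_INR N1).
    unfold b, trunc_seq. destruct Compare_dec.le_dec.
    - assert (a (n - k)%nat * / (INR n + 1) <= a (n - k)%nat).
      { rewrite <- (Rmult_1_r (a (n - k)%nat)) at 2. apply Rmult_le_compat_l; auto.
        rewrite <- Rinv_1. apply Rinv_le_contravar; lra. }
      assert (0 <= a (n - k)%nat / (INR N1 + 1)) by (apply Rle_mult_inv_pos; auto; lra).
      specialize (Hsm _ l). lra.
    - rewrite Rmult_0_l, Rplus_0_l. unfold Rdiv. apply Rmult_le_compat_l; auto.
      apply Rinv_le_contravar. lra. assert (HN1n : (N1 < n)%nat) by lia. apply lt_INR in HN1n. lra.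
      }
  rewrite sum_scal_l.
  replace (K / (1 - r) * (c * sum_f_R0 e N1 + A / (INR N1 + 1))) with
    (K * (/ (1 - r) * (c * sum_f_R0 e N1 + A / (INR N1 + 1)))) by (unfold Rdiv; ring).
  apply Rmult_le_compat_l; auto.
  eapply Rle_trans. apply (sum_convolution_le (fun k => r ^ k) b N). intros; apply pow_le; lra.
  auto.
  apply Rmult_le_compat. apply sum_geom_nonneg; lra. apply cond_pos_sum; auto.
  apply sum_geom_le; auto.
  unfold b. rewrite plus_sum.
  apply Rplus_le_compat.
  - rewrite <- (scal_sum (trunc_seq N1 e) N c). apply Rmult_le_compat_l; auto.
    apply sum_trunc_le; auto.
  - unfold Rdiv. rewrite <- scal_sum. rewrite Rmult_comm. apply Rmult_le_compat_r; auto.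
    left; apply Rinv_0_lt_compat; pose proof (pos_INR N1); lra.
Qed.

Lemma convolution_le (a : nat -> R) (r K A : R) (N : nat) :
  0 < r < 1 -> 0 <= K -> (forall m, 0 <= a m) -> sum_f_R0 a N <= A ->
  sum_f_R0 (fun n => K / (INR n + 1) * sum_f_R0 (fun k => r ^ k * a (n - k)%nat) n) N
  <= K / (1 - r) * A.
Proof.
  intros Hr HK Ha HA.
  apply Rle_trans with (sum_f_R0 (fun n => K * sum_f_R0 (fun k => r ^ k * a (n - k)%nat) n) N).
  { apply sum_Rle. intros n Hn. apply Rmult_le_compat_r.
    apply cond_pos_sum; intros; apply Rmult_le_pos; auto; apply pow_le; lra.
    unfold Rdiv. rewrite <- (Rmult_1_r K) at 2. apply Rmult_le_compat_l; auto.
    pose proof (pos_INR n). rewrite <- Rinv_1. apply Rinv_le_contravar; lra. }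
  rewrite sum_scal_l.
  replace (K / (1 - r) * A) with (K * (/ (1 - r) * A)) by (unfold Rdiv; ring).
  apply Rmult_le_compat_l; auto.
  eapply Rle_trans. apply (sum_convolution_le (fun k => r ^ k) a N). intros; apply pow_le; lra.
  auto.
  apply Rmult_le_compat. apply sum_geom_nonneg; lra. apply cond_pos_sum; auto.
  apply sum_geom_le; auto. auto.
Qed.

(** * Multiplication by a Gevrey function *)

Lemma gevrey_bound_in01 F s s' C : 0 < s -> 0 < s' -> (forall n, cont01 (F n)) ->
  (forall n x, 0 < x < 1 -> Rabs (F n x) <= C / s' ^ n * INR (fact n) ^ 2) ->
  forall k x, in01 x -> Rabs (F k x) <= gevrey_bound s (s / s') C k.
Proof.
  intros Hs Hs' HF Hb k. apply cont01_Rabs_le; auto. intros t Ht.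
  replace (gevrey_bound s (s / s') C k) with (C / s' ^ k * INR (fact k) ^ 2); auto.
  unfold gevrey_bound. replace (s / s' / s) with (/ s') by (field; lra).
  rewrite pow_inv. field. apply pow_nonzero. lra.
Qed.

Section LeibnizEnergy.
Variables (s r C : R) (F : nat -> R -> R).
Hypothesis Hs : 0 < s.
Hypothesis Hr : 0 < r < 1.
Hypothesis HC : 0 < C.
Hypothesis HFc : forall k, cont01 (F k).
Hypothesis HFb : forall k x, in01 x -> Rabs (F k x) <= gevrey_bound s r C k.

Lemma leibniz_const_nonneg : 0 <= leibniz_const s r C.
Proof.
  unfold leibniz_const. apply Rmult_le_pos. apply Rle_mult_inv_pos. apply pow_le; lra. lra.
  assert (0 < / s) by (apply Rinv_0_lt_compat; lra). nra.
Qed.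

Lemma energy_leibniz_le_weighted Z n : (forall m, cont01 (Z m)) ->
  energy s (leibniz F Z) n <=
    sum_f_R0 (fun k => leibniz_weight s r C n k * energy s Z (n - k)%nat) n.
Proof.
  intros HZ. unfold energy.
  assert (HW : forall k, cont01 (fun x => leibniz_weight s r C n k * Z (n - k)%nat x ^ 2))
    by (intros; apply cont01_mult; [apply cont01_const | apply cont01_pow; auto]).
  rewrite (sum_eq _ (fun k => RInt (fun x => leibniz_weight s r C n k * Z (n - k)%nat x ^ 2) 0 1
                     + (leibniz_weight s r C n k * Z (n - k)%nat 0 ^ 2) * s)).
  2:{ intros k _. rewrite RInt_scal_R. ring.
      apply ex_RInt_cont01; try (red; lra). apply cont01_pow; auto. }
  rewrite plus_sum, <- scal_sum, <- RInt_sum by (intros; apply ex_RInt_cont01; auto; red; lra).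
  apply Rplus_le_compat.
  - apply RInt_le. lra. apply ex_RInt_cont01; try (red; lra).
    apply cont01_pow, cont01_leibniz; auto.
    apply ex_RInt_cont01; try (red; lra). apply cont01_sum; auto.
    intros x Hx. apply leibniz_sqr_le; auto. intros; apply HFb; red; lra.
  - apply Rmult_le_compat_l. lra. apply leibniz_sqr_le; auto. intros; apply HFb; red; lra.
Qed.

Lemma energy_leibniz_le Z n : (forall m, cont01 (Z m)) ->
  coef s n * (1 + INR n / s) * energy s (leibniz F Z) n <=
  leibniz_const s r C / (INR n + 1)
  * sum_f_R0 (fun k => r ^ k * (ecoef s (n - k) * energy s Z (n - k))) n.
Proof.
  intros HZ.
  assert (Hc : 0 <= coef s n * (1 + INR n / s)).
  { apply Rmult_le_pos. left; apply coef_pos; auto.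
    assert (0 <= INR n / s) by (apply Rle_mult_inv_pos; [apply pos_INR|lra]). lra. }
  eapply Rle_trans. apply Rmult_le_compat_l. apply Hc. apply energy_leibniz_le_weighted; auto.
  rewrite scal_sum, scal_sum. apply sum_Rle. intros k Hk.
  pose proof (leibniz_weight_coef_le s r C k (n - k) Hs Hr HC) as W.
  replace (k + (n - k))%nat with n in W by lia.
  pose proof (energy_nonneg s Z (n - k) Hs (HZ _)).
  replace (leibniz_weight s r C n k * energy s Z (n - k) * (coef s n * (1 + INR n / s))) with
     (coef s n * (1 + INR n / s) * leibniz_weight s r C n k * energy s Z (n - k)) by ring.
  replace (r ^ k * (ecoef s (n - k) * energy s Z (n - k)) * (leibniz_const s r C / (INR n + 1)))
    with
     (leibniz_const s r C * r ^ k * ecoef s (n - k) / (INR n + 1) * energy s Z (n - k))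
    by (pose proof (pos_INR n); field; lra).
  apply Rmult_le_compat_r; auto.
Qed.

Lemma Yenergy_leibniz_le Z N A : (forall m, cont01 (Z m)) -> Xenergy s Z N <= A ->
  Yenergy s (leibniz F Z) N <= leibniz_const s r C / (1 - r) * A.
Proof.
  intros HZ HA. unfold Yenergy.
  eapply Rle_trans. apply sum_Rle. intros n _. apply energy_leibniz_le; auto.
  apply (convolution_le (fun m => ecoef s m * energy s Z m)); auto.
  apply leibniz_const_nonneg.
  intros m. apply Rmult_le_pos; [apply ecoef_nonneg | apply energy_nonneg]; auto.
Qed.

(* Low derivatives of [D j - V] are uniformly small, and the high ones only enter
   through the factor [1 / (n+1)] of [energy_leibniz_le]. *)
Lemma Yenergy_leibniz_cvg (D : nat -> nat -> R -> R) V A B :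
  (forall j m, cont01 (D j m)) -> (forall m, cont01 (V m)) ->
  (forall j N, Xenergy s (D j) N <= A) -> (forall N, Xenergy s V N <= B) ->
  (forall m, unif_cvg01 (fun j => D j m) (V m)) ->
  forall eps, eps > 0 -> exists J, forall j, (J <= j)%nat -> forall N,
    Yenergy s (leibniz F (fun m x => D j m x - V m x)) N <= eps.
Proof.
  intros HD HV HA HB Hcv eps He.
  set (K := leibniz_const s r C / (1 - r)).
  assert (HK : 0 <= K) by (apply Rle_mult_inv_pos; [apply leibniz_const_nonneg | lra]).
  set (AB := 2 * A + 2 * B).
  assert (HZ : forall j m, cont01 (fun x => D j m x - V m x)) by (intros; apply cont01_minus; auto).
  assert (HAB : forall j N, Xenergy s (fun m x => D j m x - V m x) N <= AB).
  { intros j N. eapply Rle_trans. apply Xenergy_minus_le; auto.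
    pose proof (HA j N). pose proof (HB N). unfold AB. lra. }
  assert (HAB0 : 0 <= AB)
    by (eapply Rle_trans;
        [apply (Xenergy_nonneg s (fun m x => D 0%nat m x - V m x) 0); auto | apply (HAB 0%nat)]).
  destruct (small_factor (K * AB) (eps / 2)) as [del [Hdel Hdel']]; [nra | lra |].
  destruct (inv_succ_lt del) as [N1 HN1]; [lra|].
  set (S1 := sum_f_R0 (ecoef s) N1).
  assert (HS1 : 0 <= S1) by (apply cond_pos_sum; intros; apply ecoef_nonneg; auto).
  destruct (small_factor (K * (1 + s) * S1) (eps / 2)) as [d [Hd Hd']];
    [apply Rmult_le_pos; [apply Rmult_le_pos|]; lra | lra |].
  destruct (unif_cvg01_finite D V Hcv N1 d) as [J HJ]; [lra|].
  exists J. intros j Hj N. unfold Yenergy.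
  eapply Rle_trans. apply sum_Rle. intros n _. apply energy_leibniz_le; auto.
  eapply Rle_trans.
  { apply (convolution_tail_le (fun m => ecoef s m * energy s (fun m x => D j m x - V m x) m)
             (ecoef s) r (leibniz_const s r C) ((1 + s) * d ^ 2) AB N N1); auto.
    - apply leibniz_const_nonneg.
    - apply Rmult_le_pos. lra. apply pow2_ge_0.
    - intros m. apply Rmult_le_pos; [apply ecoef_nonneg | apply energy_nonneg]; auto.
    - intros m; apply ecoef_nonneg; auto.
    - intros m Hm. apply Rmult_le_compat_l. apply ecoef_nonneg; auto.
      apply energy_le_sup; auto.
    - apply HAB. }
  fold K S1. assert (d ^ 2 <= d) by nra.
  assert (K * (AB / (INR N1 + 1)) <= K * AB * del).
  { unfold Rdiv. rewrite Rmult_assoc. apply Rmult_le_compat_l; auto.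
    apply Rmult_le_compat_l; lra. }
  assert (K * ((1 + s) * d ^ 2 * S1) <= K * (1 + s) * S1 * d).
  { replace (K * ((1 + s) * d ^ 2 * S1)) with (K * (1 + s) * S1 * d ^ 2) by ring.
    apply Rmult_le_compat_l; [apply Rmult_le_pos; [apply Rmult_le_pos|]; lra | lra]. }
  lra.
Qed.

End LeibnizEnergy.

(** * Passing to the limit *)

Lemma ftc01_unif_limit (g G : nat -> R -> R) h H :
  (forall j x, in01 x -> g j x = g j 0 + RInt (G j) 0 x) -> (forall j, cont01 (G j)) ->
  cont01 H -> unif_cvg01 g h -> unif_cvg01 G H ->
  forall x, in01 x -> h x = h 0 + RInt H 0 x.
Proof.
  intros Hftc HG HH Hg HGH x Hx. assert (I0 : in01 0) by (red; lra).
  apply Rminus_diag_uniq, Rabs_eq_0, Rle_antisym; [|apply Rabs_pos].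
  apply Rle_plus_epsilon. intros d Hd. rewrite Rplus_0_l.
  destruct (Hg (d / 4)) as [N1 HN1]; [lra|].
  destruct (HGH (d / 4)) as [N2 HN2]; [lra|].
  set (j := max N1 N2).
  pose proof (HN1 j (Nat.le_max_l _ _) x Hx). pose proof (HN1 j (Nat.le_max_l _ _) 0 I0).
  assert (Hint : Rabs (RInt (G j) 0 x - RInt H 0 x) <= d / 4).
  { rewrite <- (RInt_minus (V:=R_CompleteNormedModule)) by (apply ex_RInt_cont01; auto).
    red in Hx. apply Rle_trans with ((x - 0) * (d / 4)); [|nra].
    apply abs_RInt_le_const. lra.
    apply (ex_RInt_minus (V:=R_CompleteNormedModule)); apply ex_RInt_cont01; auto.
    intros t Ht. apply HN2. apply Nat.le_max_r. red; lra. }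
  replace (h x - (h 0 + RInt H 0 x)) with
    (- (g j x - h x) + (g j 0 - h 0) + (RInt (G j) 0 x - RInt H 0 x))
    by (rewrite (Hftc j x Hx); ring).
  pose proof (Rabs_triang (- (g j x - h x) + (g j 0 - h 0)) (RInt (G j) 0 x - RInt H 0 x)).
  pose proof (Rabs_triang (- (g j x - h x)) (g j 0 - h 0)). rewrite Rabs_Ropp in *. lra.
Qed.

Lemma Cinf01_unif_limit (u : nat -> R -> R) (D : nat -> nat -> R -> R) (V : nat -> R -> R) :
  (forall j, Cinf01 (u j) (D j)) -> (forall m, unif_cvg01 (fun j => D j m) (V m)) ->
  Cinf01 (V 0%nat) V.
Proof.
  intros HC Hcv.
  assert (HDc : forall j m, cont01 (D j m)) by (intros; eapply Cinf01_cont; eauto).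
  assert (HVc : forall m, cont01 (V m))
    by (intros m; apply (cont01_unif_limit (fun j => D j m)); auto).
  split; [reflexivity | split; [|auto]].
  intros n x Hx. apply derivable_pt_lim_ftc01; auto.
  apply (ftc01_unif_limit (fun j => D j n) (fun j => D j (S n))); auto.
  intros j. apply (Cinf01_ftc (u j)); auto.
Qed.

Lemma Xenergy_unif_limit_le s (D : nat -> nat -> R -> R) V A N : 0 < s ->
  (forall j m, cont01 (D j m)) -> (forall m, cont01 (V m)) ->
  (forall j, Xenergy s (D j) N <= A) -> (forall m, unif_cvg01 (fun j => D j m) (V m)) ->
  Xenergy s V N <= 2 * A + 1.
Proof.
  intros Hs HD HV HA Hcv.
  set (Se := sum_f_R0 (ecoef s) N).
  assert (HSe : 0 <= Se) by (apply cond_pos_sum; intros; apply ecoef_nonneg; auto).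
  destruct (small_factor (2 * (1 + s) * Se) 1) as [d [Hd Hd']]; [nra | lra |].
  destruct (unif_cvg01_finite D V Hcv N d) as [J HJ]; [lra|].
  set (Z := fun m x => D J m x - V m x).
  assert (HZ : forall m, cont01 (Z m)) by (intros; apply cont01_minus; auto).
  rewrite (Xenergy_ext s V (fun m x => D J m x - Z m x) N) by (intros; unfold Z; ring).
  pose proof (Xenergy_minus_le s (D J) Z N Hs (HD J) HZ).
  pose proof (Xenergy_le_sup s Z N d Hs HZ (fun m Hm => HJ m Hm J (le_n J))) as HZd.
  pose proof (HA J). fold Se in HZd. assert (d ^ 2 <= d) by nra. nra.
Qed.

Theorem mainTheorem5 (sigma sigma' : R) (f : R -> R) :
  0 < sigma -> sigma < sigma' -> gevrey f sigma' 2 ->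
  forall (u : nat -> R -> R) (Du : nat -> nat -> R -> R) (M : R),
    (forall j, inX sigma (u j) (Du j)) ->
    (forall j, XnormSq_le sigma (Du j) M) ->
    exists phi : nat -> nat,
      (forall j, (phi j < phi (S j))%nat) /\
      exists (v : R -> R) (Dv : nat -> R -> R),
        inY sigma v Dv /\
        (forall j, exists W, Cinf01 (fun x => f x * u (phi j) x - v x) W) /\
        (forall eps, eps > 0 -> exists N : nat, forall j, (N <= j)%nat ->
           forall W, Cinf01 (fun x => f x * u (phi j) x - v x) W ->
             YnormSq_le sigma W eps).
Proof.
  intros Hs Hss [F [HF [C [HC HFb]]]] u Du M Hin HM.
  set (r := sigma / sigma').
  assert (Hr : 0 < r < 1).
  { split. apply Rdiv_lt_0_compat; lra.
    apply (Rmult_lt_reg_r sigma'). lra. unfold r, Rdiv. rewrite Rmult_assoc, Rinv_l; lra. }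
  assert (HFc : forall k, cont01 (F k)) by (intros; eapply Cinf01_cont; eauto).
  assert (HB := gevrey_bound_in01 F sigma sigma' C Hs ltac:(lra) HFc HFb).
  assert (HCu : forall j, Cinf01 (u j) (Du j)) by (intros j; apply Hin).
  assert (HDc : forall j m, cont01 (Du j m)) by (intros; eapply Cinf01_cont; eauto).
  assert (HXu : forall j N, Xenergy sigma (Du j) N <= (2 + sigma) * M)
    by (intros; apply (Xenergy_le sigma M (u j)); auto; apply Hin).
  destruct (arzela_ascoli_diag Du (X_sup_bound sigma M)) as [phi [V [Hphi Hcv]]].
  { intros j m x Hx. apply (X_sup_le sigma M (u j)); auto; apply Hin. }
  { intros j m x y Hx Hy. apply (X_lipschitz sigma M (u j)); auto; apply Hin. }
  assert (HVC : Cinf01 (V 0%nat) V)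
    by (apply (Cinf01_unif_limit (fun j => u (phi j)) (fun j => Du (phi j))); auto).
  assert (HVc : forall m, cont01 (V m)) by (intros; eapply Cinf01_cont; eauto).
  assert (HXV : forall N, Xenergy sigma V N <= 2 * ((2 + sigma) * M) + 1)
    by (intros; apply (Xenergy_unif_limit_le sigma (fun j => Du (phi j))); auto).
  assert (HCdiff : forall j, Cinf01 (fun x => f x * u (phi j) x - f x * V 0%nat x)
                                    (leibniz F (fun m x => Du (phi j) m x - V m x)))
    by (intros; apply Cinf01_mult_minus; auto).
  exists phi. split; [exact Hphi|].
  exists (fun x => f x * V 0%nat x), (leibniz F V). split; [|split].
  - assert (HVY : Cinf01 (fun x => f x * V 0%nat x) (leibniz F V)) by (apply Cinf01_mult; auto).
    split; auto. eexists. apply (YnormSq_le_Yenergy sigma _ _ _ _ Hs HVY HVY).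
    intros N. apply (Yenergy_leibniz_le sigma r C F); auto.
  - intros j. eexists. apply HCdiff.
  - intros eps He.
    destruct (Yenergy_leibniz_cvg sigma r C F Hs Hr HC HFc HB (fun j => Du (phi j)) V
                _ _ (fun j => HDc (phi j)) HVc (fun j => HXu (phi j)) HXV Hcv eps He) as [J HJ].
    exists J. intros j Hj W HW. apply (YnormSq_le_Yenergy sigma _ _ _ _ Hs HW (HCdiff j)). auto.
Qed.
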